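(* Let $m\ge1$ and let $\phi\in C^\infty(\mathbb R^2)$ satisfy, for some $C>0$ and all $z\in\mathbb R^2$, $|D^3\phi(z)|\le C|z|^{2m-1}$, $|D^2\phi(z)|\le C|z|^{2m}$, $|D\phi(z)|\le C|z|^{2m+1}$. Let $\mathrm{epi}(\phi)=\{(z,t)\in\mathbb R^3:t>\phi(z)\}$. There exist constants $\varepsilon_0>0$ and $\lambda>0$ such that for every $z\in\mathbb R^2$ with $-XF(z)>\frac12|ZF(z)|$ and every $t$ with $(z,t)\in\mathrm{epi}(\phi)$, the curve $\gamma:[0,\infty)\to\mathbb R^3$, $$\gamma(s)=\begin{cases}e^{sX}(z,t), & 0\le s\le\bar s:=\varepsilon_0\dfrac{|ZF(z)|}{|z|^{2m}},\\[2mm] \gamma(\bar s)+(0,0,s-\bar s), & s\ge\bar s,\end{cases}$$ satisfies $\gamma([0,\infty))\subset\mathrm{epi}(\phi)$ and $B\big(\gamma(s),\lambda\operatorname{diam}(\gamma|_{[0,s]})\big)\subset\mathrm{epi}(\phi)$ for all $s>0$.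
   Context: Write points of $\mathbb R^3=\mathbb C\times\mathbb R$ as $(z,t)=(x,y,t)$. For a real parameter $m\ge1$ consider the vector fields $X=\partial_x+|z|^{2m}y\,\partial_t$ and $Y=\partial_y-|z|^{2m}x\,\partial_t$. An absolutely continuous curve $\gamma:[0,1]\to\mathbb R^3$ is horizontal if $\dot\gamma(s)=\alpha(s)X(\gamma(s))+\beta(s)Y(\gamma(s))$ for a.e. $s$, with length $\int_0^1|(\alpha(s),\beta(s))|\,ds$; the Carnot–Carathéodory distance $d(p,q)$ is the infimum of lengths of horizontal curves joining $p$ to $q$, $B(p,r)=\{q:d(p,q)<r\}$, and diameters are taken with respect to $d$. For $z=(x,y)$, $XF(z)=\phi_x(z)-|z|^{2m}y$, $YF(z)=\phi_y(z)+|z|^{2m}x$, $ZF(z)=(XF(z),YF(z))$ (note $ZF(z)\neq0$ forces $z\ne0$ under the hypotheses). $e^{sX}(z,t)$ denotes the point at time $s$ of the integral curve of $X$ starting at $(z,t)$; explicitly $e^{sX}(z,t)=(x+s,\,y,\,t+y\int_0^s|(x+\rho,y)|^{2m}d\rho)$. $|D^k\phi(z)|$ is the maximum of the absolute values of all $k$-th order partial derivatives of $\phi$ at $z$. *)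

From Stdlib Require Import Reals List.
Open Scope R_scope.

(* Points of R^3 = C x R, written ((x, y), t). *)
Definition pt : Type := (R * R * R)%type.
Definition px (p : pt) : R := fst (fst p).
Definition py (p : pt) : R := snd (fst p).
Definition pt3 (p : pt) : R := snd p.

(* Real power with the convention 0^a = 0 (used only with a > 0). *)
Definition rpow (x a : R) : R := if Rlt_dec 0 x then Rpower x a else 0.

Definition norm2 (x y : R) : R := sqrt (x * x + y * y).

Definition w2m (m x y : R) : R := rpow (norm2 x y) (2 * m).

Definition continuous2 (f : R -> R -> R) : Prop :=
  forall x0 y0 eps, 0 < eps -> exists delta, 0 < delta /\
    forall x y, norm2 (x - x0) (y - y0) < delta -> Rabs (f x y - f x0 y0) < eps.

(* phi is C^infinity on R^2 and D w is its iterated partial derivative along the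
   word w : false = d/dx, true = d/dy; D (b :: w) = d_b (D w), D nil = phi. *)
Definition smooth_family (phi : R -> R -> R) (D : list bool -> R -> R -> R) : Prop :=
  D nil = phi /\
  (forall w x y, derivable_pt_lim (fun u => D w u y) x (D (false :: w) x y)) /\
  (forall w x y, derivable_pt_lim (fun v => D w x v) y (D (true :: w) x y)) /\
  (forall w, continuous2 (D w)).

Definition XF (m : R) (D : list bool -> R -> R -> R) (x y : R) : R :=
  D (false :: nil) x y - w2m m x y * y.
Definition YF (m : R) (D : list bool -> R -> R -> R) (x y : R) : R :=
  D (true :: nil) x y + w2m m x y * x.
Definition normZF (m : R) (D : list bool -> R -> R -> R) (x y : R) : R :=
  norm2 (XF m D x y) (YF m D x y).

Definition epi (phi : R -> R -> R) (p : pt) : Prop := pt3 p > phi (px p) (py p).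

(* e^{sX}(p) : c is the integral curve of X = d_x + |z|^{2m} y d_t starting at p. *)
Definition integral_curve_X (m : R) (p : pt) (c : R -> pt) : Prop :=
  c 0 = p /\
  forall s,
    derivable_pt_lim (fun u => px (c u)) s 1 /\
    derivable_pt_lim (fun u => py (c u)) s 0 /\
    derivable_pt_lim (fun u => pt3 (c u)) s (w2m m (px (c s)) (py (c s)) * py (c s)).

Fixpoint ordered_intervals (a b : R) (l : list (R * R)) : Prop :=
  match l with
  | nil => a <= b
  | (u, v) :: l' => a <= u /\ u <= v /\ ordered_intervals v b l'
  end.

Fixpoint sum_len (l : list (R * R)) : R :=
  match l with nil => 0 | (u, v) :: l' => (v - u) + sum_len l' end.

Fixpoint sum_incr (f : R -> R) (l : list (R * R)) : R :=
  match l with nil => 0 | (u, v) :: l' => Rabs (f v - f u) + sum_incr f l' end.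

Definition abs_cont (f : R -> R) (a b : R) : Prop :=
  forall eps, 0 < eps -> exists delta, 0 < delta /\
    forall l, ordered_intervals a b l -> sum_len l < delta -> sum_incr f l < eps.

Definition null_set (N : R -> Prop) : Prop :=
  forall eps, 0 < eps -> exists c e : nat -> R,
    (forall n, c n <= e n) /\
    (forall s, N s -> exists n, c n < s < e n) /\
    (forall k, sum_f_R0 (fun n => e n - c n) k <= eps).

(* horizontal curve gamma : [0,1] -> R^3:
   absolutely continuous, and for a.e. s, gamma'(s) = alpha X(gamma s) + beta Y(gamma s),
   where X = d_x + |z|^{2m} y d_t, Y = d_y - |z|^{2m} x d_t. *)
Definition horizontal (m : R) (g : R -> pt) : Prop :=
  abs_cont (fun s => px (g s)) 0 1 /\
  abs_cont (fun s => py (g s)) 0 1 /\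
  abs_cont (fun s => pt3 (g s)) 0 1 /\
  exists N, null_set N /\
    forall s, 0 < s < 1 -> ~ N s ->
      exists alpha beta,
        derivable_pt_lim (fun u => px (g u)) s alpha /\
        derivable_pt_lim (fun u => py (g u)) s beta /\
        derivable_pt_lim (fun u => pt3 (g u)) s
          (w2m m (px (g s)) (py (g s)) * (alpha * py (g s) - beta * px (g s))).

(* partitions 0 = s_0 <= s_1 <= ... <= s_k = 1, as the list [s_1; ...; s_k] *)
Fixpoint partition_from (a : R) (l : list R) : Prop :=
  match l with
  | nil => a = 1
  | s :: l' => a <= s /\ partition_from s l'
  end.

Fixpoint poly_len (g : R -> pt) (a : R) (l : list R) : R :=
  match l with
  | nil => 0
  | s :: l' => norm2 (px (g s) - px (g a)) (py (g s) - py (g a)) + poly_len g s l'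
  end.

(* "length(gamma) <= L": the length of a horizontal curve is int_0^1 |(alpha,beta)|,
   which for an absolutely continuous curve equals the total variation of its
   projection s |-> (x(s),y(s)). *)
Definition length_le (g : R -> pt) (L : R) : Prop :=
  forall l, partition_from 0 l -> poly_len g 0 l <= L.

Definition hcurve (m : R) (p q : pt) (g : R -> pt) : Prop :=
  horizontal m g /\ g 0 = p /\ g 1 = q.

Definition cc_dist_lt (m : R) (p q : pt) (r : R) : Prop :=
  exists g L, hcurve m p q g /\ length_le g L /\ L < r.

(* d(p,q) > r  (d may be +infinity) *)
Definition cc_dist_gt (m : R) (p q : pt) (r : R) : Prop :=
  exists r', r < r' /\
    forall g, hcurve m p q g -> forall L, length_le g L -> r' <= L.

Definition diam_gt (m : R) (S : pt -> Prop) (r : R) : Prop :=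
  exists a b, S a /\ S b /\ cc_dist_gt m a b r.

(* q in B(p, lam * diam S) = { q : d(p,q) < lam * diam S }, lam > 0 *)
Definition in_ball_diam (m : R) (p : pt) (lam : R) (S : pt -> Prop) (q : pt) : Prop :=
  exists r, cc_dist_lt m p q r /\ diam_gt m S (r / lam).

Definition gamma_curve (c : R -> pt) (sbar : R) (s : R) : pt :=
  if Rle_dec s sbar then c s
  else (px (c sbar), py (c sbar), pt3 (c sbar) + (s - sbar)).

From Stdlib Require Import Reals List Lra Psatz Classical ClassicalDescription.
Open Scope R_scope.

(* Let F(p) = t - phi(z) be the height of p = (z, t) above the graph of phi.  Along the flow
   of X, dF/ds = -XF >= |ZF| / 4 as long as |ZF| stays close to its initial value a; since ZF
   is Lipschitz with constant O(|z|^(2m)) near z this holds up to sbar = eps0 a / |z|^(2m),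
   after which gamma rises vertically.  Hence F (gamma s) >= F(z, t) + a sigma / 4 + tau with
   sigma = min s sbar and tau = max 0 (s - sbar).

   Along a horizontal curve of length L, F drops by at most L sup |ZF| (an almost-everywhere
   chain rule, proved with Cousin's lemma).  If q lies within lambda diam (gamma [0, s]) of
   gamma s, two points of gamma [0, s] are at distance > r / lambda.  Joining them by a piece
   of the X-flow followed by a loop (out radially by d, along an arc, back in, back along an
   arc) supplying the missing height shows r < mu (sigma + 5 d), where |z|^(2m) d^2 <= 4^m tau,
   and d^(2m+2) <= tau if d > |z|.  In either case the drop of F from gamma s to q is smaller
   than the gain. *)

Lemma norm2_ge0 a b : 0 <= norm2 a b.
Proof. apply sqrt_pos. Qed.

Lemma norm2_sqr a b : norm2 a b * norm2 a b = a * a + b * b.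
Proof. unfold norm2; rewrite sqrt_sqrt; nra. Qed.

Lemma Rle_of_sqr_le x y : 0 <= y -> x * x <= y * y -> x <= y.
Proof. intros; nra. Qed.

Lemma Rabs_sqr a : Rabs a * Rabs a = a * a.
Proof. rewrite <- Rabs_mult; apply Rabs_right; nra. Qed.

Lemma norm2_le_of_sqr a b c : 0 <= c -> a * a + b * b <= c * c -> norm2 a b <= c.
Proof.
  intros Hc H; apply Rle_of_sqr_le; auto.
  rewrite norm2_sqr; exact H.
Qed.

Lemma norm2_le_compat a b a' b' :
  Rabs a <= Rabs a' -> Rabs b <= Rabs b' -> norm2 a b <= norm2 a' b'.
Proof.
  intros H1 H2; apply sqrt_le_1_alt.
  rewrite <- (Rabs_sqr a), <- (Rabs_sqr b), <- (Rabs_sqr a'), <- (Rabs_sqr b').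
  pose proof (Rabs_pos a); pose proof (Rabs_pos b); nra.
Qed.

Lemma norm2_x_0 a : norm2 a 0 = Rabs a.
Proof.
  unfold norm2; replace (a * a + 0 * 0) with (Rsqr a) by (unfold Rsqr; ring).
  apply sqrt_Rsqr_abs.
Qed.

Lemma Rabs_le_norm2_l a b : Rabs a <= norm2 a b.
Proof. rewrite <- norm2_x_0; apply norm2_le_compat; rewrite ?Rabs_R0; auto using Rle_refl, Rabs_pos. Qed.

Lemma Rabs_le_norm2_r a b : Rabs b <= norm2 a b.
Proof.
  rewrite <- norm2_x_0; unfold norm2 at 2; rewrite Rplus_comm.
  apply norm2_le_compat; rewrite ?Rabs_R0; auto using Rle_refl, Rabs_pos.
Qed.

Lemma norm2_le_Rabs_add a b : norm2 a b <= Rabs a + Rabs b.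
Proof.
  pose proof (Rabs_pos a); pose proof (Rabs_pos b).
  apply norm2_le_of_sqr; [lra|].
  rewrite <- (Rabs_sqr a), <- (Rabs_sqr b); nra.
Qed.

Lemma dot_le_norm2 a b c d : a * c + b * d <= norm2 a b * norm2 c d.
Proof.
  pose proof (norm2_sqr a b); pose proof (norm2_sqr c d).
  pose proof (norm2_ge0 a b); pose proof (norm2_ge0 c d).
  destruct (Rle_dec (a * c + b * d) 0); [nra|].
  apply Rle_of_sqr_le; [nra|].
  replace (norm2 a b * norm2 c d * (norm2 a b * norm2 c d))
    with ((norm2 a b * norm2 a b) * (norm2 c d * norm2 c d)) by ring.
  pose proof (Rle_0_sqr (a * d - b * c)); unfold Rsqr in *; nra.
Qed.

Lemma Rabs_dot_le_norm2 a b c d : Rabs (a * c + b * d) <= norm2 a b * norm2 c d.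
Proof.
  apply Rabs_le; split; [|apply dot_le_norm2].
  pose proof (dot_le_norm2 (- a) (- b) c d).
  unfold norm2 in *; replace (- a * - a + - b * - b) with (a * a + b * b) in H by ring; lra.
Qed.

Lemma norm2_triang a b c d : norm2 (a + c) (b + d) <= norm2 a b + norm2 c d.
Proof.
  pose proof (norm2_ge0 a b); pose proof (norm2_ge0 c d).
  apply norm2_le_of_sqr; [lra|].
  pose proof (norm2_sqr a b); pose proof (norm2_sqr c d); pose proof (dot_le_norm2 a b c d); nra.
Qed.

Lemma norm2_sub_sym a b c d : norm2 (a - c) (b - d) = norm2 (c - a) (d - b).
Proof. unfold norm2; f_equal; ring. Qed.

Lemma norm2_scal k a b : norm2 (k * a) (k * b) = Rabs k * norm2 a b.
Proof.
  unfold norm2; replace (k * a * (k * a) + k * b * (k * b)) with (Rsqr k * (a * a + b * b))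
    by (unfold Rsqr; ring).
  rewrite sqrt_mult_alt, sqrt_Rsqr_abs; auto using Rle_0_sqr.
Qed.

Lemma norm2_triang_sub a b c d e f :
  norm2 (a - e) (b - f) <= norm2 (a - c) (b - d) + norm2 (c - e) (d - f).
Proof.
  replace (a - e) with ((a - c) + (c - e)) by ring.
  replace (b - f) with ((b - d) + (d - f)) by ring; apply norm2_triang.
Qed.

Lemma norm2_triang_rev a b c d : Rabs (norm2 a b - norm2 c d) <= norm2 (a - c) (b - d).
Proof.
  pose proof (norm2_triang_sub c d a b 0 0); pose proof (norm2_triang_sub a b c d 0 0).
  rewrite !Rminus_0_r in *; rewrite (norm2_sub_sym c d a b) in H.
  apply Rabs_le; split; lra.
Qed.

Lemma norm2_rot k a b c s : s * s + c * c = 1 ->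
  norm2 (k * (a * c - b * s)) (k * (a * s + b * c)) = Rabs k * norm2 a b.
Proof.
  intros H; rewrite norm2_scal; unfold norm2; do 2 f_equal.
  transitivity ((a * a + b * b) * (s * s + c * c)); [ring|rewrite H; ring].
Qed.

Lemma sin_cos_sqr a : sin a * sin a + cos a * cos a = 1.
Proof. pose proof (sin2_cos2 a); unfold Rsqr in H; lra. Qed.

Lemma rpow_ge0 r e : 0 <= rpow r e.
Proof. unfold rpow; destruct (Rlt_dec 0 r); [left; apply exp_pos|lra]. Qed.

Lemma rpow_gt0 r e : 0 < r -> 0 < rpow r e.
Proof. intros; unfold rpow; destruct (Rlt_dec 0 r); [apply exp_pos|lra]. Qed.

Lemma rpow_0_l e : rpow 0 e = 0.
Proof. unfold rpow; destruct (Rlt_dec 0 0); lra. Qed.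

Lemma rpow_Rpower r e : 0 < r -> rpow r e = Rpower r e.
Proof. intros; unfold rpow; destruct (Rlt_dec 0 r); lra. Qed.

Lemma rpow_le_compat r1 r2 e : 0 <= e -> 0 <= r1 <= r2 -> rpow r1 e <= rpow r2 e.
Proof.
  intros He [H1 H2]; destruct (Req_dec r1 0).
  - subst; rewrite rpow_0_l; apply rpow_ge0.
  - rewrite !rpow_Rpower by lra; apply Rle_Rpower_l; lra.
Qed.

Lemma rpow_mult_distr a b e : 0 <= a -> 0 <= b -> rpow (a * b) e = rpow a e * rpow b e.
Proof.
  intros Ha Hb; destruct (Req_dec a 0); [subst; rewrite Rmult_0_l, rpow_0_l; ring|].
  destruct (Req_dec b 0); [subst; rewrite Rmult_0_r, rpow_0_l; ring|].
  rewrite !rpow_Rpower by nra; symmetry; apply Rpower_mult_distr; lra.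
Qed.

Lemma rpow_plus_1 r e : 0 <= r -> rpow r (e + 1) = rpow r e * r.
Proof.
  intros Hr; destruct (Req_dec r 0); [subst; rewrite !rpow_0_l; ring|].
  rewrite !rpow_Rpower by lra; rewrite Rpower_plus, Rpower_1 by lra; reflexivity.
Qed.

Lemma rpow_ge1 b e : 1 <= b -> 0 <= e -> 1 <= rpow b e.
Proof.
  intros Hb He; rewrite rpow_Rpower, <- (Rpower_O b) by lra; apply Rle_Rpower; lra.
Qed.

Lemma Rdiv_le_0_compat a b : 0 <= a -> 0 < b -> 0 <= a / b.
Proof. intros; apply Rle_mult_inv_pos; auto. Qed.

(** * Cousin's lemma and an almost-everywhere increment bound *)

Fixpoint chain (Q : R -> R -> Prop) (a : R) (l : list R) (b : R) : Prop :=
  match l with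
  | nil => a = b
  | s :: l' => a <= s /\ Q a s /\ chain Q s l' b
  end.

Lemma chain_snoc Q a l b c : chain Q a l b -> b <= c -> Q b c -> chain Q a (l ++ c :: nil) c.
Proof.
  revert a; induction l as [|s l IH]; intros a H Hbc HQ; simpl in *.
  - subst; repeat split; auto.
  - destruct H as [H1 [H2 H3]]; repeat split; auto.
Qed.

Definition fine (G : R -> R -> Prop) (u v : R) : Prop :=
  exists t d, (t = u \/ t = v) /\ G t d /\ v - u < d.

(* The supremum of the points reachable from 0 by fine chains is reachable, and is 1. *)
Lemma cousin (G : R -> R -> Prop) :
  (forall s, 0 <= s <= 1 -> exists d, 0 < d /\ G s d) ->
  exists l, chain (fine G) 0 l 1.
Proof.
  intros HG.
  set (E := fun b => 0 <= b <= 1 /\ exists l, chain (fine G) 0 l b).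
  assert (HE0 : E 0) by (split; [lra|exists nil; reflexivity]).
  assert (Hbound : bound E) by (exists 1; intros x [Hx _]; lra).
  destruct (completeness E Hbound (ex_intro _ 0 HE0)) as [sg [Hub Hlub]].
  assert (Hsg : 0 <= sg <= 1) by (split; [apply Hub, HE0|apply Hlub; intros x [Hx _]; lra]).
  destruct (HG sg Hsg) as [d [Hd HGd]].
  assert (Hnear : exists b, E b /\ sg - d < b).
  { apply NNPP; intro Hn.
    assert (sg <= sg - d); [|lra].
    apply Hlub; intros x Ex; apply Rnot_lt_le; intro Hlt; apply Hn; exists x; auto. }
  destruct Hnear as [b [[Hb [l Hl]] Hbd]].
  assert (Hbs : b <= sg) by (apply Hub; split; auto; exists l; auto).
  assert (Hreach : chain (fine G) 0 (l ++ sg :: nil) sg).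
  { apply chain_snoc with b; auto; exists sg, d; repeat split; auto; lra. }
  destruct (Rle_lt_or_eq_dec sg 1 (proj2 Hsg)) as [Hlt|Heq]; [exfalso|subst; eauto].
  set (c := Rmin 1 (sg + d / 2)).
  assert (Hc : sg < c <= 1) by (unfold c, Rmin; destruct (Rle_dec 1 (sg + d / 2)); lra).
  assert (E c).
  { split; [lra|]; exists ((l ++ sg :: nil) ++ c :: nil).
    apply chain_snoc with sg; [auto|lra|].
    exists sg, d; repeat split; auto; unfold c; pose proof (Rmin_r 1 (sg + d / 2)); lra. }
  pose proof (Hub c H); lra.
Qed.

Definition sum_pairs (h : R * R -> R) (l : list (R * R)) : R :=
  fold_right (fun p acc => h p + acc) 0 l.

Lemma sum_len_pairs l : sum_len l = sum_pairs (fun p => snd p - fst p) l.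
Proof. induction l as [|[u v] l IH]; simpl; auto; rewrite IH; reflexivity. Qed.

Lemma sum_incr_pairs f l : sum_incr f l = sum_pairs (fun p => Rabs (f (snd p) - f (fst p))) l.
Proof. induction l as [|[u v] l IH]; simpl; auto; rewrite IH; reflexivity. Qed.

Lemma sum_pairs_filter h (q : R * R -> bool) l :
  sum_pairs h l = sum_pairs h (filter q l) + sum_pairs h (filter (fun p => negb (q p)) l).
Proof.
  induction l as [|p l IH]; simpl; [lra|].
  destruct (q p); simpl; rewrite IH; ring.
Qed.

Lemma sum_pairs_le h1 h2 l :
  (forall p, In p l -> h1 p <= h2 p) -> sum_pairs h1 l <= sum_pairs h2 l.
Proof.
  induction l as [|p l IH]; intros H; simpl; [lra|].
  apply Rplus_le_compat; [apply H; left|apply IH; intros; apply H; right]; auto.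
Qed.

Lemma sum_pairs_ge0 h l : (forall p, In p l -> 0 <= h p) -> 0 <= sum_pairs h l.
Proof.
  intros H; replace 0 with (sum_pairs (fun _ => 0) l); [apply sum_pairs_le; auto|].
  clear H; induction l; simpl; [reflexivity|rewrite IHl; ring].
Qed.

Lemma sum_pairs_filter_le h q l :
  (forall p, In p l -> 0 <= h p) -> sum_pairs h (filter q l) <= sum_pairs h l.
Proof.
  intros H; rewrite (sum_pairs_filter h q l).
  enough (0 <= sum_pairs h (filter (fun p => negb (q p)) l)) by lra.
  apply sum_pairs_ge0; intros p Hp; apply filter_In in Hp; apply H; tauto.
Qed.

Lemma sum_pairs_plus h1 h2 l :
  sum_pairs (fun p => h1 p + h2 p) l = sum_pairs h1 l + sum_pairs h2 l.
Proof. induction l; simpl; [ring|rewrite IHl; ring]. Qed.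

Lemma sum_pairs_scal k h l : sum_pairs (fun p => k * h p) l = k * sum_pairs h l.
Proof. induction l; simpl; [ring|rewrite IHl; ring]. Qed.

Lemma ordered_intervals_le a b l : ordered_intervals a b l -> a <= b.
Proof.
  revert a; induction l as [|[u v] l IH]; intros a H; simpl in *; auto.
  destruct H as [H1 [H2 H3]]; specialize (IH v H3); lra.
Qed.

Lemma ordered_intervals_In a b l p : ordered_intervals a b l -> In p l ->
  a <= fst p /\ fst p <= snd p /\ snd p <= b.
Proof.
  revert a; induction l as [|[u v] l IH]; intros a H Hp; simpl in *; [contradiction|].
  destruct H as [H1 [H2 H3]]; destruct Hp as [Hp|Hp].
  - subst; simpl; pose proof (ordered_intervals_le _ _ _ H3); lra.
  - destruct (IH v H3 Hp); lra.
Qed.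

Lemma ordered_intervals_weaken a a' b l :
  ordered_intervals a b l -> a' <= a -> ordered_intervals a' b l.
Proof.
  destruct l as [|[u v] l]; simpl; intros; [lra|].
  destruct H as [? [? ?]]; repeat split; auto; lra.
Qed.

Lemma ordered_intervals_filter a b l q :
  ordered_intervals a b l -> ordered_intervals a b (filter q l).
Proof.
  revert a; induction l as [|[u v] l IH]; intros a H; simpl in *; auto.
  destruct H as [H1 [H2 H3]]; destruct (q (u, v)); simpl.
  - repeat split; auto.
  - apply ordered_intervals_weaken with v; auto; lra.
Qed.

Lemma sum_len_ge0 a b l : ordered_intervals a b l -> 0 <= sum_len l.
Proof.
  intros H; rewrite sum_len_pairs; apply sum_pairs_ge0.
  intros p Hp; destruct (ordered_intervals_In _ _ _ _ H Hp); lra.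
Qed.

Lemma sum_len_le_of_inside a b l c e :
  ordered_intervals a b l -> (forall p, In p l -> c <= fst p /\ snd p <= e) ->
  sum_len l <= Rmax 0 (e - c).
Proof.
  revert a c; induction l as [|[u v] l IH]; intros a c H Hin; simpl in *; [apply Rmax_l|].
  destruct H as [H1 [H2 H3]]; destruct (Hin (u, v) (or_introl eq_refl)) as [Hcu Hve]; simpl in *.
  pose proof (IH v v H3 (fun p Hp => conj (proj1 (ordered_intervals_In _ _ _ _ H3 Hp))
    (proj2 (Hin p (or_intror Hp))))).
  rewrite Rmax_right in * by lra; lra.
Qed.

Definition decide (P : Prop) : bool := if excluded_middle_informative P then true else false.

Lemma decide_spec (P : Prop) : decide P = true <-> P.
Proof. unfold decide; destruct (excluded_middle_informative P); split; auto; discriminate. Qed.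

Lemma sum_len_le_of_cover (c e : nat -> R) : (forall n, c n <= e n) -> forall K l a b,
  ordered_intervals a b l ->
  (forall p, In p l -> exists n, (n <= K)%nat /\ c n <= fst p /\ snd p <= e n) ->
  sum_len l <= sum_f_R0 (fun n => e n - c n) K.
Proof.
  intros Hce; induction K as [|K IH]; intros l a b Hl Hin; simpl.
  - eapply Rle_trans; [apply (sum_len_le_of_inside a b l (c 0%nat) (e 0%nat)); auto|].
    + intros p Hp; destruct (Hin p Hp) as [n [Hn Hi]]; replace n with 0%nat in Hi by lia; exact Hi.
    + apply Rmax_lub; [|lra]; pose proof (Hce 0%nat); lra.
  - set (inK := fun p : R * R => decide (c (S K) <= fst p /\ snd p <= e (S K))).
    rewrite !sum_len_pairs, (sum_pairs_filter _ inK l), <- !sum_len_pairs, Rplus_comm.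
    apply Rplus_le_compat.
    2: { eapply Rle_trans; [apply (sum_len_le_of_inside a b _ (c (S K)) (e (S K)))|].
         - apply ordered_intervals_filter; auto.
         - intros p Hp; apply filter_In in Hp; apply decide_spec, Hp.
         - apply Rmax_lub; [|lra]; pose proof (Hce (S K)); lra. }
    apply IH with a b; [apply ordered_intervals_filter; auto|].
    intros p Hp; apply filter_In in Hp; destruct Hp as [Hp Hq].
    destruct (Hin p Hp) as [n [Hn Hi]]; exists n; split; auto.
    destruct (Nat.eq_dec n (S K)); [|lia]; subst.
    apply Bool.negb_true_iff, Bool.not_true_iff_false in Hq.
    exfalso; apply Hq, decide_spec, Hi.
Qed.

Lemma cover_index_bound (c e : nat -> R) (l : list (R * R)) :
  (forall p, In p l -> exists n, c n <= fst p /\ snd p <= e n) ->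
  exists K, forall p, In p l -> exists n, (n <= K)%nat /\ c n <= fst p /\ snd p <= e n.
Proof.
  induction l as [|p l IH]; intros H; [exists 0%nat; intros p []|].
  destruct IH as [K HK]; [intros q Hq; apply H; right; auto|].
  destruct (H p (or_introl eq_refl)) as [n0 Hn0].
  exists (Nat.max n0 K); intros q [Hq|Hq].
  - subst; exists n0; split; auto; lia.
  - destruct (HK q Hq) as [n [Hn Hi]]; exists n; split; auto; lia.
Qed.

Definition cover_cons (a : R) (c : nat -> R) (n : nat) : R :=
  match n with O => a | S k => c k end.

Lemma null_set_add_point a N : null_set N -> null_set (fun s => a = s \/ N s).
Proof.
  intros HN eps Heps.
  destruct (HN (eps / 2) ltac:(lra)) as [c [e [Hce [Hcov Hsum]]]].
  set (w := eps / 4).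
  exists (cover_cons (a - w) c), (cover_cons (a + w) e); split; [|split].
  - intros [|n]; simpl; [unfold w; lra|apply Hce].
  - intros s [<-|Hs]; [exists 0%nat; simpl; unfold w; lra|].
    destruct (Hcov s Hs) as [n Hn]; exists (S n); exact Hn.
  - assert (Hshift : forall K, sum_f_R0 (fun n => cover_cons (a + w) e n - cover_cons (a - w) c n) (S K)
                               = 2 * w + sum_f_R0 (fun n => e n - c n) K).
    { induction K; [simpl; ring|]; rewrite tech5, IHK; simpl; ring. }
    intros [|K]; [simpl; unfold w; lra|].
    rewrite Hshift; pose proof (Hsum K); unfold w; lra.
Qed.

Lemma null_set_with_ends N : null_set N -> null_set (fun s => 0 = s \/ 1 = s \/ N s).
Proof. intros; do 2 apply null_set_add_point; auto. Qed.

Lemma null_set_In (l : list R) : null_set (fun s => In s l).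
Proof.
  induction l as [|a l IH]; [|apply null_set_add_point; exact IH].
  intros eps Heps; exists (fun _ => 0), (fun _ => 0); split; [|split].
  - intros; lra.
  - intros s [].
  - intros K; induction K; simpl; lra.
Qed.

Definition hdist (p q : pt) : R := norm2 (px q - px p) (py q - py p).

Lemma hdist_ge0 p q : 0 <= hdist p q.
Proof. apply norm2_ge0. Qed.

Lemma hdist_sym p q : hdist p q = hdist q p.
Proof. apply norm2_sub_sym. Qed.

Lemma hdist_triang p q r : hdist p r <= hdist p q + hdist q r.
Proof. unfold hdist; rewrite Rplus_comm; apply norm2_triang_sub. Qed.

Fixpoint steps (a : R) (l : list R) : list (R * R) :=
  match l with nil => nil | s :: l' => (a, s) :: steps s l' end.

Lemma steps_ordered Q a l b : chain Q a l b -> ordered_intervals a b (steps a l).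
Proof.
  revert a; induction l as [|s l IH]; intros a H; simpl in *; [lra|].
  destruct H as [H1 [H2 H3]]; repeat split; auto; lra.
Qed.

Lemma steps_In Q a l b p : chain Q a l b -> In p (steps a l) ->
  Q (fst p) (snd p) /\ a <= fst p /\ fst p <= snd p /\ snd p <= b.
Proof.
  intros H Hp; split; [|exact (ordered_intervals_In _ _ _ _ (steps_ordered _ _ _ _ H) Hp)].
  revert a H Hp; induction l as [|s l IH]; intros a H Hp; simpl in *; [contradiction|].
  destruct H as [_ [H2 H3]]; destruct Hp as [Hp|Hp]; [subst p; exact H2|eauto].
Qed.

Lemma steps_incr Q f a l b : chain Q a l b ->
  Rabs (f b - f a) <= sum_pairs (fun p => Rabs (f (snd p) - f (fst p))) (steps a l).
Proof.
  revert a; induction l as [|s l IH]; intros a H; simpl in *.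
  - subst; unfold Rminus; rewrite Rplus_opp_r, Rabs_R0; lra.
  - destruct H as [_ [_ H3]]; specialize (IH s H3).
    replace (f b - f a) with ((f s - f a) + (f b - f s)) by ring.
    pose proof (Rabs_triang (f s - f a) (f b - f s)); lra.
Qed.

Lemma steps_len Q a l b : chain Q a l b -> sum_pairs (fun p => snd p - fst p) (steps a l) = b - a.
Proof.
  revert a; induction l as [|s l IH]; intros a H; simpl in *; [subst; ring|].
  destruct H as [_ [_ H3]]; rewrite (IH s H3); ring.
Qed.

Lemma poly_len_steps (g : R -> pt) a l :
  poly_len g a l = sum_pairs (fun p => hdist (g (fst p)) (g (snd p))) (steps a l).
Proof. revert a; induction l as [|s l IH]; intros a; simpl; [reflexivity|rewrite IH; reflexivity]. Qed.

Lemma chain_partition_from Q l a : chain Q a l 1 -> partition_from a l.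
Proof.
  revert a; induction l as [|s l IH]; intros a H; simpl in *; auto.
  destruct H as [H1 [_ H3]]; auto.
Qed.

Definition covered (c e : nat -> R) (t d : R) : Prop := exists n, c n <= t - d /\ t + d <= e n.

Lemma gauge_of_null_cover (P : R -> R -> Prop) N c e :
  (forall s, 0 = s \/ 1 = s \/ N s -> exists n, c n < s < e n) ->
  (forall s, 0 < s < 1 -> ~ N s -> exists d, 0 < d /\ P s d) ->
  forall s, 0 <= s <= 1 -> exists d, 0 < d /\ (P s d \/ covered c e s d).
Proof.
  intros Hcov Hloc s Hs; destruct (classic (0 = s \/ 1 = s \/ N s)) as [HNs|HNs].
  - destruct (Hcov s HNs) as [n Hn]; exists (Rmin (s - c n) (e n - s)); split.
    + apply Rmin_glb_lt; lra.
    + right; exists n; pose proof (Rmin_l (s - c n) (e n - s)); pose proof (Rmin_r (s - c n) (e n - s)); lra.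
  - assert (Hs' : 0 < s < 1) by (destruct Hs as [[Hs0|Hs0] [Hs1|Hs1]]; subst; [lra|tauto|tauto|tauto]).
    destruct (Hloc s Hs' ltac:(tauto)) as [d [Hd HP]]; exists d; split; [exact Hd|left; exact HP].
Qed.

Lemma uncovered_steps_len (P : R -> R -> Prop) c e l : (forall n, c n <= e n) ->
  chain (fine (fun t d => P t d \/ covered c e t d)) 0 l 1 ->
  exists K, sum_len (filter (fun p => negb (decide (fine P (fst p) (snd p)))) (steps 0 l))
            <= sum_f_R0 (fun n => e n - c n) K.
Proof.
  intros Hce Hl.
  assert (Hin : forall p, In p (filter (fun p => negb (decide (fine P (fst p) (snd p)))) (steps 0 l)) ->
                exists n, c n <= fst p /\ snd p <= e n).
  { intros p Hp; apply filter_In in Hp; destruct Hp as [Hp Hq].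
    apply Bool.negb_true_iff, Bool.not_true_iff_false in Hq.
    destruct (steps_In _ _ _ _ _ Hl Hp) as [[t [d [Ht [HGt Hd]]]] [_ [Hp12 _]]].
    destruct HGt as [HGt|[n Hn]]; [exfalso; apply Hq, decide_spec; exists t, d; auto|].
    exists n; destruct Ht; subst; split; lra. }
  destruct (cover_index_bound _ _ _ Hin) as [K HK]; exists K.
  apply (sum_len_le_of_cover c e Hce K _ 0 1); auto.
  apply ordered_intervals_filter, (steps_ordered _ _ _ _ Hl).
Qed.

Section IncrementBound.

Variables (g : R -> pt) (F : R -> R) (M : R).
Hypothesis HM : 0 <= M.

Definition dominated_near (eta t d : R) : Prop :=
  forall s', 0 <= s' <= 1 -> Rabs (s' - t) < d ->
    Rabs (F s' - F t) <= M * hdist (g t) (g s') + eta * Rabs (s' - t).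

Lemma fine_dominated_incr eta u v : 0 <= u <= v -> v <= 1 ->
  fine (dominated_near eta) u v -> Rabs (F v - F u) <= M * hdist (g u) (g v) + eta * (v - u).
Proof.
  intros Huv Hv [t [d [[Ht|Ht] [Hdom Hd]]]]; subst t.
  - specialize (Hdom v ltac:(split; lra) ltac:(rewrite Rabs_right; lra)).
    rewrite (Rabs_right (v - u)) in Hdom by lra; exact Hdom.
  - specialize (Hdom u ltac:(split; lra) ltac:(rewrite Rabs_left1; lra)).
    rewrite (Rabs_left1 (u - v)) in Hdom by lra; rewrite Rabs_minus_sym, hdist_sym; lra.
Qed.

Lemma dominated_steps_incr eta Q l : 0 <= eta -> chain Q 0 l 1 ->
  sum_pairs (fun p => Rabs (F (snd p) - F (fst p)))
    (filter (fun p => decide (fine (dominated_near eta) (fst p) (snd p))) (steps 0 l))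
  <= M * poly_len g 0 l + eta.
Proof.
  intros Heta Hl; eapply Rle_trans.
  - apply sum_pairs_le with (h2 := fun p => M * hdist (g (fst p)) (g (snd p)) + eta * (snd p - fst p)).
    intros p Hp; apply filter_In in Hp; destruct Hp as [Hp Hq].
    destruct (steps_In _ _ _ _ _ Hl Hp) as [_ [H0 [H1 H2]]].
    apply fine_dominated_incr; [lra|lra|apply decide_spec, Hq].
  - rewrite sum_pairs_plus, !sum_pairs_scal, poly_len_steps.
    assert (Hlen : sum_pairs (fun p => snd p - fst p)
                     (filter (fun p => decide (fine (dominated_near eta) (fst p) (snd p))) (steps 0 l)) <= 1).
    { rewrite <- (Rminus_0_r 1), <- (steps_len _ 0 l 1 Hl); apply sum_pairs_filter_le.
      intros p Hp; destruct (steps_In _ _ _ _ _ Hl Hp) as [_ [? [? ?]]]; lra. }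
    apply Rplus_le_compat; [apply Rmult_le_compat_l; auto|nra].
    apply sum_pairs_filter_le; intros; apply hdist_ge0.
Qed.

(* A fine partition of [0,1] (Cousin) splits into steps where the domination applies and
   steps inside a small cover of the null set, where absolute continuity applies. *)
Theorem increment_le_of_dominated L :
  abs_cont F 0 1 ->
  (exists N, null_set N /\ forall s, 0 < s < 1 -> ~ N s ->
     forall eta, 0 < eta -> exists d, 0 < d /\ dominated_near eta s d) ->
  length_le g L -> Rabs (F 1 - F 0) <= M * L.
Proof.
  intros HAC [N [HN Hloc]] HL; apply le_epsilon; intros eps Heps.
  set (eta := eps / 2).
  destruct (HAC eta ltac:(unfold eta; lra)) as [dA [HdA HAC']].
  destruct (null_set_with_ends N HN (dA / 2) ltac:(lra)) as [c [e [Hce [Hcov Hsum]]]].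
  destruct (cousin _ (gauge_of_null_cover (dominated_near eta) N c e Hcov
    (fun s Hs HNs => Hloc s Hs HNs eta ltac:(unfold eta; lra)))) as [l Hl].
  set (good := fun p : R * R => decide (fine (dominated_near eta) (fst p) (snd p))).
  pose proof (steps_incr _ F 0 l 1 Hl) as Hincr.
  rewrite (sum_pairs_filter _ good) in Hincr.
  pose proof (dominated_steps_incr eta _ l ltac:(unfold eta; lra) Hl) as Hgood.
  destruct (uncovered_steps_len _ c e l Hce Hl) as [K HK].
  pose proof (Hsum K).
  assert (Hbad : sum_incr F (filter (fun p => negb (good p)) (steps 0 l)) < eta).
  { apply HAC'; [apply ordered_intervals_filter, (steps_ordered _ _ _ _ Hl)|unfold good; lra]. }
  rewrite sum_incr_pairs in Hbad.
  pose proof (HL l (chain_partition_from _ _ _ Hl)).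
  assert (M * poly_len g 0 l <= M * L) by (apply Rmult_le_compat_l; auto).
  unfold good, eta in *; lra.
Qed.

End IncrementBound.

Definition vdist (p q : pt) : R := Rabs (pt3 q - pt3 p).

Lemma vdist_sym p q : vdist p q = vdist q p.
Proof. apply Rabs_minus_sym. Qed.

Lemma vdist_triang p q r : vdist p r <= vdist p q + vdist q r.
Proof.
  unfold vdist; replace (pt3 r - pt3 p) with ((pt3 q - pt3 p) + (pt3 r - pt3 q)) by ring.
  apply Rabs_triang.
Qed.

Definition lipschitz01 (d : pt -> pt -> R) (g : R -> pt) (K : R) : Prop :=
  forall u v, 0 <= u <= 1 -> 0 <= v <= 1 -> d (g u) (g v) <= K * Rabs (v - u).

Definition horizontal_at (m : R) (g : R -> pt) (s : R) : Prop :=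
  exists alpha beta,
    derivable_pt_lim (fun u => px (g u)) s alpha /\
    derivable_pt_lim (fun u => py (g u)) s beta /\
    derivable_pt_lim (fun u => pt3 (g u)) s
      (w2m m (px (g s)) (py (g s)) * (alpha * py (g s) - beta * px (g s))).

Definition lip_hcurve (m : R) (g : R -> pt) (K : R) (bad : list R) : Prop :=
  lipschitz01 hdist g K /\ (exists Kt, 0 <= Kt /\ lipschitz01 vdist g Kt) /\
  forall s, 0 < s < 1 -> ~ In s bad -> horizontal_at m g s.

Lemma abs_cont_of_lipschitz f K : 0 <= K ->
  (forall u v, 0 <= u <= 1 -> 0 <= v <= 1 -> Rabs (f v - f u) <= K * Rabs (v - u)) ->
  abs_cont f 0 1.
Proof.
  intros HK Hf eps Heps; exists (eps / (K + 1)); split; [apply Rdiv_lt_0_compat; lra|].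
  intros l Hl Hs.
  assert (sum_incr f l <= K * sum_len l).
  { rewrite sum_incr_pairs, sum_len_pairs, <- sum_pairs_scal; apply sum_pairs_le.
    intros p Hp; destruct (ordered_intervals_In _ _ _ _ Hl Hp) as [? [? ?]].
    rewrite <- (Rabs_right (snd p - fst p)) by lra; apply Hf; lra. }
  pose proof (sum_len_ge0 _ _ _ Hl).
  assert (sum_len l * (K + 1) < eps).
  { apply Rmult_lt_reg_r with (/ (K + 1)); [apply Rinv_0_lt_compat; lra|].
    rewrite Rmult_assoc, Rinv_r, Rmult_1_r by lra; exact Hs. }
  nra.
Qed.

Lemma partition_from_le1 a l : partition_from a l -> a <= 1.
Proof.
  revert a; induction l as [|s l IH]; simpl; intros a H; [lra|].
  destruct H as [H1 H2]; specialize (IH _ H2); lra.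
Qed.

Lemma length_le_of_lipschitz g K : 0 <= K -> lipschitz01 hdist g K -> length_le g K.
Proof.
  intros HK Hg l Hl.
  enough (forall a, 0 <= a -> partition_from a l -> poly_len g a l <= K * (1 - a))
    by (specialize (H 0 (Rle_refl 0) Hl); lra).
  clear Hl; induction l as [|s l IH]; intros a Ha Hl; simpl in *; [subst; lra|].
  destruct Hl as [H1 H2]; pose proof (partition_from_le1 _ _ H2) as Hs1.
  pose proof (IH s ltac:(lra) H2) as Hrest.
  pose proof (Hg a s ltac:(split; lra) ltac:(split; lra)) as Hstep.
  unfold hdist in Hstep; rewrite Rabs_right in Hstep by lra; nra.
Qed.

Lemma lip_hcurve_hcurve m g K bad : 0 <= K -> lip_hcurve m g K bad ->
  horizontal m g /\ length_le g K.
Proof.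
  intros HK [Hz [[Kt [HKt Ht]] Hr]].
  split; [|apply length_le_of_lipschitz; auto].
  split; [|split; [|split]].
  - apply abs_cont_of_lipschitz with K; auto.
    intros u v Hu Hv; eapply Rle_trans; [apply Rabs_le_norm2_l|apply Hz; auto].
  - apply abs_cont_of_lipschitz with K; auto.
    intros u v Hu Hv; eapply Rle_trans; [apply Rabs_le_norm2_r|apply Hz; auto].
  - apply abs_cont_of_lipschitz with Kt; auto; intros u v Hu Hv; apply Ht; auto.
  - exists (fun s => In s bad); split; [apply null_set_In|].
    intros s Hs Hn; destruct (Hr s Hs Hn) as [a [b [H1 [H2 H3]]]]; exists a, b; auto.
Qed.

(* Pointwise forms of the Stdlib rules, which are stated with [plus_fct], [mult_fct], ...
   and do not unify with lambda terms. *)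
Lemma derivable_pt_lim_add f g c a b : derivable_pt_lim f c a -> derivable_pt_lim g c b ->
  derivable_pt_lim (fun s => f s + g s) c (a + b).
Proof. intros; apply (derivable_pt_lim_plus f g c a b); auto. Qed.

Lemma derivable_pt_lim_sub f g c a b : derivable_pt_lim f c a -> derivable_pt_lim g c b ->
  derivable_pt_lim (fun s => f s - g s) c (a - b).
Proof. intros; apply (derivable_pt_lim_minus f g c a b); auto. Qed.

Lemma derivable_pt_lim_mul f g c a b : derivable_pt_lim f c a -> derivable_pt_lim g c b ->
  derivable_pt_lim (fun s => f s * g s) c (a * g c + f c * b).
Proof. intros; apply (derivable_pt_lim_mult f g c a b); auto. Qed.

Lemma derivable_pt_lim_mulr f c a k : derivable_pt_lim f c a ->
  derivable_pt_lim (fun s => f s * k) c (a * k).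
Proof.
  intros H; pose proof (derivable_pt_lim_mul f (fun _ => k) c a 0 H (derivable_pt_lim_const k c)) as Hm.
  rewrite Rmult_0_r, Rplus_0_r in Hm; exact Hm.
Qed.

Lemma derivable_pt_lim_mull f c a k : derivable_pt_lim f c a ->
  derivable_pt_lim (fun s => k * f s) c (k * a).
Proof.
  intros H; pose proof (derivable_pt_lim_mul (fun _ => k) f c 0 a (derivable_pt_lim_const k c) H) as Hm.
  rewrite Rmult_0_l, Rplus_0_l in Hm; exact Hm.
Qed.

Lemma derivable_pt_lim_lin a b s : derivable_pt_lim (fun u => a * u + b) s a.
Proof.
  pose proof (derivable_pt_lim_plus (fun u => a * u) (fun _ => b) s a 0) as Hp.
  unfold plus_fct in Hp; rewrite Rplus_0_r in Hp; apply Hp; [|apply derivable_pt_lim_const].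
  pose proof (derivable_pt_lim_scal (fun u => u) a s 1 (derivable_pt_lim_id s)) as Hm.
  unfold mult_real_fct in Hm; rewrite Rmult_1_r in Hm; exact Hm.
Qed.

Lemma derivable_pt_lim_affine f s a b l : derivable_pt_lim f (a * s + b) l ->
  derivable_pt_lim (fun u => f (a * u + b)) s (l * a).
Proof.
  intros H; apply (derivable_pt_lim_comp (fun u => a * u + b) f s a l); auto.
  apply derivable_pt_lim_lin.
Qed.

Lemma horizontal_at_affine m g s a b : horizontal_at m g (a * s + b) ->
  horizontal_at m (fun u => g (a * u + b)) s.
Proof.
  intros [al [be [H1 [H2 H3]]]]; exists (al * a), (be * a).
  split; [|split]; try apply (derivable_pt_lim_affine (fun u => px (g u))); auto;
    try apply (derivable_pt_lim_affine (fun u => py (g u))); auto.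
  pose proof (derivable_pt_lim_affine (fun u => pt3 (g u)) s a b _ H3) as H; simpl in H.
  match goal with |- derivable_pt_lim _ _ ?l => replace l with
    (w2m m (px (g (a * s + b))) (py (g (a * s + b))) *
     (al * py (g (a * s + b)) - be * px (g (a * s + b))) * a) by ring end.
  exact H.
Qed.

Lemma horizontal_at_locally_ext m g h s d : 0 < d ->
  (forall y, s - d < y < s + d -> g y = h y) -> horizontal_at m h s -> horizontal_at m g s.
Proof.
  intros Hd Hgh [al [be [H1 [H2 H3]]]]; exists al, be.
  assert (Hs : g s = h s) by (apply Hgh; lra).
  assert (Hloc : forall (k : pt -> R) l, derivable_pt_lim (fun u => k (h u)) s l ->
                 derivable_pt_lim (fun u => k (g u)) s l).
  { intros k l Hk; apply (derivable_pt_lim_locally_ext (fun u => k (h u)) _ s (s - d) (s + d)); [lra| |exact Hk].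
    intros y Hy; rewrite Hgh; auto. }
  rewrite Hs; split; [|split]; apply Hloc; auto.
Qed.

Definition concat (g1 g2 : R -> pt) (s : R) : pt :=
  if Rle_dec s (1 / 2) then g1 (2 * s) else g2 (2 * s - 1).

Lemma concat_0 g1 g2 : concat g1 g2 0 = g1 0.
Proof. unfold concat; destruct (Rle_dec 0 (1 / 2)); [f_equal; ring|lra]. Qed.

Lemma concat_1 g1 g2 : concat g1 g2 1 = g2 1.
Proof. unfold concat; destruct (Rle_dec 1 (1 / 2)); [lra|f_equal; ring]. Qed.

Lemma lipschitz01_concat (d : pt -> pt -> R) g1 g2 K1 K2 :
  0 <= K1 -> 0 <= K2 ->
  (forall p q r, d p r <= d p q + d q r) -> (forall p q, d p q = d q p) ->
  lipschitz01 d g1 K1 -> lipschitz01 d g2 K2 -> g1 1 = g2 0 ->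
  lipschitz01 d (concat g1 g2) (2 * (K1 + K2)).
Proof.
  intros HK1 HK2 Htri Hsym H1 H2 Hj.
  enough (Hle : forall u v, 0 <= u <= 1 -> 0 <= v <= 1 -> u <= v ->
    d (concat g1 g2 u) (concat g1 g2 v) <= 2 * (K1 + K2) * Rabs (v - u)).
  { intros u v Hu Hv; destruct (Rle_dec u v); auto.
    rewrite Hsym, Rabs_minus_sym; apply Hle; auto; lra. }
  intros u v Hu Hv Huv; rewrite (Rabs_right (v - u)) by lra; unfold concat.
  destruct (Rle_dec u (1 / 2)); destruct (Rle_dec v (1 / 2)); [| | lra |].
  - eapply Rle_trans; [apply H1; lra|].
    rewrite Rabs_right by lra; nra.
  - eapply Rle_trans; [apply (Htri _ (g1 1))|].
    pose proof (H1 (2 * u) 1 ltac:(split; lra) ltac:(split; lra)).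
    pose proof (H2 0 (2 * v - 1) ltac:(split; lra) ltac:(split; lra)).
    rewrite Hj in *; rewrite Rabs_right in * by lra; nra.
  - eapply Rle_trans; [apply H2; lra|].
    rewrite Rabs_right by lra; nra.
Qed.

Lemma lip_hcurve_concat m g1 g2 K1 K2 b1 b2 :
  0 <= K1 -> 0 <= K2 -> lip_hcurve m g1 K1 b1 -> lip_hcurve m g2 K2 b2 -> g1 1 = g2 0 ->
  lip_hcurve m (concat g1 g2) (2 * (K1 + K2))
    (map (fun s => s / 2) b1 ++ (1 / 2) :: map (fun s => (s + 1) / 2) b2).
Proof.
  intros HK1 HK2 [Hz1 [[Kt1 [HKt1 Ht1]] Hr1]] [Hz2 [[Kt2 [HKt2 Ht2]] Hr2]] Hj.
  split; [|split].
  - apply lipschitz01_concat; auto using hdist_triang, hdist_sym.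
  - exists (2 * (Kt1 + Kt2)); split; [lra|].
    apply lipschitz01_concat; auto using vdist_triang, vdist_sym.
  - intros s Hs Hn; destruct (Rlt_le_dec s (1 / 2)) as [Hlt|Hge].
    + apply horizontal_at_locally_ext with (h := fun u => g1 (2 * u + 0)) (d := 1 / 2 - s); [lra| |].
      * intros y Hy; unfold concat; destruct (Rle_dec y (1 / 2)); [f_equal; ring|lra].
      * apply horizontal_at_affine, Hr1; [lra|].
        intro Hin; apply Hn, in_or_app; left; apply in_map_iff; exists (2 * s + 0); split; [field|auto].
    + destruct (Req_dec s (1 / 2)) as [Hhalf|Hhalf];
        [exfalso; apply Hn, in_or_app; right; left; auto|].
      apply horizontal_at_locally_ext with (h := fun u => g2 (2 * u + - 1)) (d := s - 1 / 2); [lra| |].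
      * intros y Hy; unfold concat; destruct (Rle_dec y (1 / 2)); [lra|f_equal; ring].
      * apply horizontal_at_affine, Hr2; [lra|].
        intro Hin; apply Hn, in_or_app; right; right; apply in_map_iff.
        exists (2 * s + - 1); split; [field|auto].
Qed.

Lemma Rmin_Rmax_01 u v s : 0 <= u <= 1 -> 0 <= v <= 1 -> Rmin u v <= s <= Rmax u v -> 0 <= s <= 1.
Proof. intros; unfold Rmin, Rmax in *; destruct (Rle_dec u v); lra. Qed.

Lemma Rabs_incr_le_of_deriv f f' u v K :
  (forall s, Rmin u v <= s <= Rmax u v -> derivable_pt_lim f s (f' s)) ->
  (forall s, Rmin u v <= s <= Rmax u v -> Rabs (f' s) <= K) ->
  Rabs (f v - f u) <= K * Rabs (v - u).
Proof.
  intros Hd Hb; destruct (MVT_abs f f' u v Hd) as [c [-> Hc]].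
  apply Rmult_le_compat_r; auto using Rabs_pos.
Qed.

Lemma norm2_incr_le_of_deriv x y al be u v K :
  (forall s, Rmin u v <= s <= Rmax u v -> derivable_pt_lim x s (al s)) ->
  (forall s, Rmin u v <= s <= Rmax u v -> derivable_pt_lim y s (be s)) ->
  (forall s, Rmin u v <= s <= Rmax u v -> norm2 (al s) (be s) <= K) ->
  norm2 (x v - x u) (y v - y u) <= K * Rabs (v - u).
Proof.
  intros Hx Hy Hb.
  set (Dx := x v - x u); set (Dy := y v - y u).
  set (h := fun s => (x s - x u) * Dx + (y s - y u) * Dy).
  assert (Hh : forall s, Rmin u v <= s <= Rmax u v -> derivable_pt_lim h s (al s * Dx + be s * Dy)).
  { intros s Hs; unfold h.
    apply derivable_pt_lim_add; apply derivable_pt_lim_mulr.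
    - rewrite <- (Rminus_0_r (al s)); apply derivable_pt_lim_sub; [apply Hx, Hs|apply derivable_pt_lim_const].
    - rewrite <- (Rminus_0_r (be s)); apply derivable_pt_lim_sub; [apply Hy, Hs|apply derivable_pt_lim_const]. }
  destruct (MVT_abs h _ u v Hh) as [c [Hc Hcuv]].
  replace (h v - h u) with (Dx * Dx + Dy * Dy) in Hc by (unfold h, Dx, Dy; ring).
  rewrite <- norm2_sqr, Rabs_right in Hc by (apply Rle_ge, Rmult_le_pos; apply norm2_ge0).
  pose proof (norm2_ge0 Dx Dy); pose proof (Rabs_pos (v - u)).
  assert (HK : 0 <= K) by (eapply Rle_trans; [apply norm2_ge0|apply (Hb c Hcuv)]).
  assert (Hdot : Rabs (al c * Dx + be c * Dy) <= K * norm2 Dx Dy).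
  { eapply Rle_trans; [apply Rabs_dot_le_norm2|apply Rmult_le_compat_r; auto]. }
  destruct (Req_dec (norm2 Dx Dy) 0) as [Hz|Hz]; [rewrite Hz; nra|].
  apply Rmult_le_reg_l with (norm2 Dx Dy); [lra|].
  rewrite Hc; replace (norm2 Dx Dy * (K * Rabs (v - u))) with ((K * norm2 Dx Dy) * Rabs (v - u)) by ring.
  apply Rmult_le_compat_r; auto.
Qed.

Lemma lip_hcurve_of_deriv m g al be K Kt :
  (forall s, derivable_pt_lim (fun u => px (g u)) s (al s)) ->
  (forall s, derivable_pt_lim (fun u => py (g u)) s (be s)) ->
  (forall s, derivable_pt_lim (fun u => pt3 (g u)) s
      (w2m m (px (g s)) (py (g s)) * (al s * py (g s) - be s * px (g s)))) ->
  (forall s, 0 <= s <= 1 -> norm2 (al s) (be s) <= K) ->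
  (forall s, 0 <= s <= 1 ->
     Rabs (w2m m (px (g s)) (py (g s)) * (al s * py (g s) - be s * px (g s))) <= Kt) ->
  lip_hcurve m g K nil.
Proof.
  intros Hx Hy Ht Hb Hbt; split; [|split].
  - intros u v Hu Hv; apply (norm2_incr_le_of_deriv (fun s => px (g s)) (fun s => py (g s)) al be).
    1-2: intros; auto.
    intros s Hs; apply Hb, (Rmin_Rmax_01 u v); auto.
  - exists Kt; split; [eapply Rle_trans; [apply Rabs_pos|apply (Hbt 0); lra]|].
    intros u v Hu Hv; apply (Rabs_incr_le_of_deriv (fun s => pt3 (g s))
      (fun s => w2m m (px (g s)) (py (g s)) * (al s * py (g s) - be s * px (g s)))); [intros; apply Ht|].
    intros s Hs; apply Hbt, (Rmin_Rmax_01 u v); auto.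
  - intros s _ _; exists (al s), (be s); auto.
Qed.

Lemma lip_hcurve_weaken m g K K' bad : K <= K' -> lip_hcurve m g K bad -> lip_hcurve m g K' bad.
Proof.
  intros HK [Hz Hrest]; split; auto.
  intros u v Hu Hv; eapply Rle_trans; [apply Hz; auto|apply Rmult_le_compat_r; auto using Rabs_pos].
Qed.

(** * Explicit horizontal curves: segments of X, radial rays, arcs, loops *)

Definition wrad (m r : R) : R := rpow r (2 * m).

(* Going once around the horizontal lift of the circle of radius r changes the height
   by 2 pi angular_rate m r. *)
Definition angular_rate (m r : R) : R := wrad m r * (r * r).

Lemma wrad_ge0 m r : 0 <= wrad m r.
Proof. apply rpow_ge0. Qed.

Lemma wrad_le_compat m a b : 0 <= m -> 0 <= a <= b -> wrad m a <= wrad m b.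
Proof. intros; apply rpow_le_compat; lra. Qed.

Lemma wrad_mul_le_compat m a b : 0 <= m -> 0 <= a <= b -> wrad m a * a <= wrad m b * b.
Proof. intros; apply Rmult_le_compat; try lra; [apply wrad_ge0|apply wrad_le_compat; auto]. Qed.

Lemma wrad_le_doubling m r r' : 0 <= m -> 0 <= r -> r <= 2 * r' -> wrad m r <= rpow 2 (2 * m) * wrad m r'.
Proof.
  intros hm Hr Hrr; unfold wrad; rewrite <- rpow_mult_distr by lra.
  apply rpow_le_compat; lra.
Qed.

Lemma angular_rate_ge0 m r : 0 <= angular_rate m r.
Proof. apply Rmult_le_pos; [apply wrad_ge0|nra]. Qed.

Lemma angular_rate_le_compat m a b : 0 <= m -> 0 <= a <= b -> angular_rate m a <= angular_rate m b.
Proof.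
  intros; unfold angular_rate; pose proof (wrad_ge0 m a).
  apply Rmult_le_compat; [lra|nra|apply wrad_le_compat; auto|nra].
Qed.

Lemma angular_rate_lt_compat m a b : 0 <= m -> 0 < a < b -> angular_rate m a < angular_rate m b.
Proof.
  intros; unfold angular_rate; pose proof (rpow_gt0 a (2 * m) ltac:(lra)).
  pose proof (wrad_le_compat m a b ltac:(lra) ltac:(lra)); unfold wrad in *.
  apply Rlt_le_trans with (rpow a (2 * m) * (b * b)); [apply Rmult_lt_compat_l; nra|].
  apply Rmult_le_compat_r; nra.
Qed.

Lemma derivable_pt_lim_cos_lin th c : derivable_pt_lim (fun s => cos (th * s)) c (- sin (th * c) * th).
Proof.
  pose proof (derivable_pt_lim_affine cos c th 0 _ (derivable_pt_lim_cos (th * c + 0))) as H.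
  rewrite Rplus_0_r in H; apply (derivable_pt_lim_ext (fun s => cos (th * s + 0)));
    [intros; rewrite Rplus_0_r; reflexivity|exact H].
Qed.

Lemma derivable_pt_lim_sin_lin th c : derivable_pt_lim (fun s => sin (th * s)) c (cos (th * c) * th).
Proof.
  pose proof (derivable_pt_lim_affine sin c th 0 _ (derivable_pt_lim_sin (th * c + 0))) as H.
  rewrite Rplus_0_r in H; apply (derivable_pt_lim_ext (fun s => sin (th * s + 0)));
    [intros; rewrite Rplus_0_r; reflexivity|exact H].
Qed.

Lemma pt_eq (a b c a' b' c' : R) : a = a' -> b = b' -> c = c' -> ((a, b, c) : pt) = (a', b', c').
Proof. intros; subst; auto. Qed.

Lemma w2m_le_Rabs_add m a b : 0 <= m -> w2m m a b <= rpow (Rabs a + Rabs b) (2 * m).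
Proof. intros; apply rpow_le_compat; [lra|split; [apply norm2_ge0|apply norm2_le_Rabs_add]]. Qed.

(* A piece of the integral curve of X, shifted vertically by [o]. *)
Definition x_segment (x y : R) (T : R -> R) (o u v : R) (s : R) : pt :=
  (x + (u + (v - u) * s), y, T (u + (v - u) * s) + o).

Lemma lip_hcurve_x_segment m x y T o u v : 0 <= m ->
  (forall w, derivable_pt_lim T w (w2m m (x + w) y * y)) ->
  lip_hcurve m (x_segment x y T o u v) (Rabs (v - u)) nil.
Proof.
  intros hm HT.
  apply lip_hcurve_of_deriv with (al := fun _ => v - u) (be := fun _ => 0)
    (Kt := rpow (Rabs x + (Rabs u + Rabs v) + Rabs y) (2 * m) * Rabs y * Rabs (v - u));
    unfold x_segment, px, py, pt3; cbn [fst snd].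
  - intros s; apply (derivable_pt_lim_ext (fun s => (v - u) * s + (x + u))); [intros; ring|].
    apply derivable_pt_lim_lin.
  - intros s; apply derivable_pt_lim_const.
  - intros s; replace (u + (v - u) * s) with ((v - u) * s + u) by ring.
    replace (w2m m (x + ((v - u) * s + u)) y * ((v - u) * y - 0 * (x + ((v - u) * s + u))))
      with (w2m m (x + ((v - u) * s + u)) y * y * (v - u) + 0) by ring.
    apply (derivable_pt_lim_ext (fun s => T ((v - u) * s + u) + o)); [intros; do 2 f_equal; ring|].
    apply derivable_pt_lim_add; [|apply derivable_pt_lim_const].
    apply derivable_pt_lim_affine, HT.
  - intros s _; rewrite norm2_x_0; lra.
  - intros s Hs.
    replace ((v - u) * y - 0 * (x + (u + (v - u) * s))) with (y * (v - u)) by ring.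
    rewrite !Rabs_mult, (Rabs_right (w2m _ _ _)), <- Rmult_assoc by (apply Rle_ge, rpow_ge0).
    apply Rmult_le_compat_r; [apply Rabs_pos|apply Rmult_le_compat_r; [apply Rabs_pos|]].
    eapply Rle_trans; [apply w2m_le_Rabs_add; auto|apply rpow_le_compat; [lra|]].
    split; [pose proof (Rabs_pos (x + (u + (v - u) * s))); pose proof (Rabs_pos y); lra|].
    assert (Rabs (u + (v - u) * s) <= Rabs u + Rabs v).
    { replace (u + (v - u) * s) with (u * (1 - s) + v * s) by ring.
      eapply Rle_trans; [apply Rabs_triang|].
      rewrite !Rabs_mult, (Rabs_right s), (Rabs_right (1 - s)) by lra.
      pose proof (Rabs_pos u); pose proof (Rabs_pos v); nra. }
    pose proof (Rabs_triang x (u + (v - u) * s)); lra.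
Qed.

Definition radial (k0 k1 xb yb tb : R) (s : R) : pt :=
  ((k0 + k1 * s) * xb, (k0 + k1 * s) * yb, tb).

Lemma lip_hcurve_radial m k0 k1 xb yb tb :
  lip_hcurve m (radial k0 k1 xb yb tb) (Rabs k1 * norm2 xb yb) nil.
Proof.
  apply lip_hcurve_of_deriv with (al := fun _ => k1 * xb) (be := fun _ => k1 * yb) (Kt := 0);
    unfold radial, px, py, pt3; cbn [fst snd].
  - intros s; apply (derivable_pt_lim_ext (fun s => (k1 * xb) * s + k0 * xb)); [intros; ring|].
    apply derivable_pt_lim_lin.
  - intros s; apply (derivable_pt_lim_ext (fun s => (k1 * yb) * s + k0 * yb)); [intros; ring|].
    apply derivable_pt_lim_lin.
  - intros s; replace (k1 * xb * ((k0 + k1 * s) * yb) - k1 * yb * ((k0 + k1 * s) * xb)) with 0 by ring.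
    rewrite Rmult_0_r; apply derivable_pt_lim_const.
  - intros s _; rewrite norm2_scal; lra.
  - intros s _; replace (k1 * xb * ((k0 + k1 * s) * yb) - k1 * yb * ((k0 + k1 * s) * xb)) with 0 by ring.
    rewrite Rmult_0_r, Rabs_R0; lra.
Qed.

Definition arc (k th xb yb tb F : R) (s : R) : pt :=
  (k * (xb * cos (th * s) - yb * sin (th * s)), k * (xb * sin (th * s) + yb * cos (th * s)),
   tb - F * th * s).

Lemma lip_hcurve_arc m k th xb yb tb : 0 <= k ->
  lip_hcurve m (arc k th xb yb tb (angular_rate m (k * norm2 xb yb))) (Rabs th * k * norm2 xb yb) nil.
Proof.
  intros Hk; set (F := angular_rate m (k * norm2 xb yb)).
  set (c := fun s => cos (th * s)); set (sn := fun s => sin (th * s)).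
  assert (HE : forall s, w2m m (k * (xb * c s - yb * sn s)) (k * (xb * sn s + yb * c s)) *
     (- th * k * (xb * sn s + yb * c s) * (k * (xb * sn s + yb * c s)) -
      th * k * (xb * c s - yb * sn s) * (k * (xb * c s - yb * sn s))) = - (F * th)).
  { intros s; unfold w2m; rewrite norm2_rot by apply sin_cos_sqr; rewrite Rabs_right by lra.
    unfold F, angular_rate, wrad; pose proof (norm2_sqr xb yb); pose proof (sin_cos_sqr (th * s)).
    unfold c, sn; transitivity (- (rpow (k * norm2 xb yb) (2 * m) * th * k * k *
      ((xb * xb + yb * yb) * (sin (th * s) * sin (th * s) + cos (th * s) * cos (th * s))))); [ring|].
    rewrite H0, <- H; ring. }
  apply lip_hcurve_of_deriv with (al := fun s => - th * k * (xb * sn s + yb * c s))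
    (be := fun s => th * k * (xb * c s - yb * sn s)) (Kt := Rabs (F * th));
    unfold arc, px, py, pt3; cbn [fst snd]; fold (c 0) (sn 0).
  - intros s; apply (derivable_pt_lim_ext (fun s => k * (xb * c s - yb * sn s))); [reflexivity|].
    replace (- th * k * (xb * sn s + yb * c s)) with (k * (xb * (- sin (th * s) * th) - yb * (cos (th * s) * th)))
      by (unfold c, sn; ring).
    apply derivable_pt_lim_mull, derivable_pt_lim_sub; apply derivable_pt_lim_mull;
      [apply derivable_pt_lim_cos_lin|apply derivable_pt_lim_sin_lin].
  - intros s; apply (derivable_pt_lim_ext (fun s => k * (xb * sn s + yb * c s))); [reflexivity|].
    replace (th * k * (xb * c s - yb * sn s)) with (k * (xb * (cos (th * s) * th) + yb * (- sin (th * s) * th)))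
      by (unfold c, sn; ring).
    apply derivable_pt_lim_mull, derivable_pt_lim_add; apply derivable_pt_lim_mull;
      [apply derivable_pt_lim_sin_lin|apply derivable_pt_lim_cos_lin].
  - intros s; fold (c s) (sn s); rewrite HE.
    apply (derivable_pt_lim_ext (fun s => (- (F * th)) * s + tb)); [intros; ring|apply derivable_pt_lim_lin].
  - intros s _.
    replace (- th * k * (xb * sn s + yb * c s)) with ((th * k) * (- (xb * sn s + yb * c s))) by ring.
    replace (th * k * (xb * c s - yb * sn s)) with ((th * k) * (xb * c s - yb * sn s)) by ring.
    rewrite norm2_scal, Rabs_mult, (Rabs_right k) by lra.
    unfold norm2 at 1; replace (- (xb * sn s + yb * c s) * - (xb * sn s + yb * c s) +
      (xb * c s - yb * sn s) * (xb * c s - yb * sn s)) with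
      ((xb * xb + yb * yb) * (sn s * sn s + c s * c s)) by ring.
    unfold c, sn; rewrite sin_cos_sqr, Rmult_1_r; apply Rle_refl.
  - intros s _; fold (c s) (sn s); rewrite HE, Rabs_Ropp; lra.
Qed.

Section Loop.

Variables (m xb yb tb d th : R).
Hypotheses (Hrho : 0 < norm2 xb yb) (Hd : 0 <= d).

Let rho := norm2 xb yb.
Let k := 1 + d / rho.
Let xb' := xb * cos th - yb * sin th.
Let yb' := xb * sin th + yb * cos th.
Let t1 := tb - angular_rate m (k * rho) * th.

(* Out radially by [d], around by the angle [th], back in, and back around: the two arcs
   have radii [rho + d] and [rho], so the net vertical displacement is
   [th * (angular_rate m rho - angular_rate m (rho + d))]. *)
Definition loop_curve : R -> pt :=
  concat (concat (radial 1 (d / rho) xb yb tb) (arc k th xb yb tb (angular_rate m (k * rho))))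
         (concat (radial k (- (d / rho)) xb' yb' t1) (arc 1 (- th) xb' yb' t1 (angular_rate m (1 * norm2 xb' yb')))).

Lemma loop_outer_radius : k * rho = rho + d.
Proof. unfold k; field; unfold rho; lra. Qed.

Lemma loop_rotated_norm : norm2 xb' yb' = rho.
Proof.
  unfold xb', yb'; rewrite <- (Rmult_1_l (xb * cos th - yb * sin th)),
    <- (Rmult_1_l (xb * sin th + yb * cos th)), norm2_rot by apply sin_cos_sqr.
  rewrite Rabs_R1; unfold rho; ring.
Qed.

Lemma loop_curve_0 : loop_curve 0 = (xb, yb, tb).
Proof. unfold loop_curve; rewrite !concat_0; unfold radial; apply pt_eq; ring. Qed.

Lemma loop_curve_1 :
  loop_curve 1 = (xb, yb, tb + th * (angular_rate m rho - angular_rate m (rho + d))).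
Proof.
  unfold loop_curve; rewrite !concat_1; unfold arc.
  rewrite Rmult_1_r, cos_neg, sin_neg, loop_rotated_norm, <- loop_outer_radius.
  pose proof (sin_cos_sqr th) as Hsc; unfold xb', yb', t1; apply pt_eq.
  - transitivity (xb * (sin th * sin th + cos th * cos th)); [ring|rewrite Hsc; ring].
  - transitivity (yb * (sin th * sin th + cos th * cos th)); [ring|rewrite Hsc; ring].
  - rewrite Rmult_1_l; ring.
Qed.

Lemma lip_hcurve_loop_curve :
  exists bad, lip_hcurve m loop_curve (4 * (2 * d + Rabs th * (2 * rho + d))) bad.
Proof.
  assert (Hrho' : 0 < rho) by exact Hrho.
  assert (Hk : 1 <= k) by (unfold k; pose proof (Rdiv_le_0_compat d rho Hd Hrho'); lra).
  assert (Hdrho : Rabs (d / rho) * rho = d)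
    by (rewrite Rabs_right by (apply Rle_ge, Rdiv_le_0_compat; lra); field; lra).
  pose proof (lip_hcurve_radial m 1 (d / rho) xb yb tb) as HR1.
  pose proof (lip_hcurve_arc m k th xb yb tb ltac:(lra)) as HA1.
  pose proof (lip_hcurve_radial m k (- (d / rho)) xb' yb' t1) as HR2.
  pose proof (lip_hcurve_arc m 1 (- th) xb' yb' t1 ltac:(lra)) as HA2.
  fold rho in HR1, HA1; rewrite loop_rotated_norm, Rabs_Ropp in HR2, HA2; rewrite Hdrho in HR1, HR2.
  assert (J1 : radial 1 (d / rho) xb yb tb 1 = arc k th xb yb tb (angular_rate m (k * rho)) 0).
  { unfold radial, arc, k; rewrite !Rmult_0_r, cos_0, sin_0; apply pt_eq; ring. }
  assert (J2 : arc k th xb yb tb (angular_rate m (k * rho)) 1 = radial k (- (d / rho)) xb' yb' t1 0).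
  { unfold radial, arc, xb', yb', t1; rewrite !Rmult_1_r; apply pt_eq; ring. }
  assert (J3 : radial k (- (d / rho)) xb' yb' t1 1 = arc 1 (- th) xb' yb' t1 (angular_rate m (1 * rho)) 0).
  { unfold radial, arc, k; rewrite !Rmult_0_r, cos_0, sin_0; apply pt_eq; ring. }
  pose proof (Rabs_pos th).
  assert (HK1 : 0 <= Rabs th * k * rho) by (apply Rmult_le_pos; nra).
  assert (HK2 : 0 <= Rabs th * 1 * rho) by nra.
  pose proof (lip_hcurve_concat m _ _ _ _ _ _ Hd HK1 HR1 HA1 J1) as H1.
  pose proof (lip_hcurve_concat m _ _ _ _ _ _ Hd HK2 HR2 HA2 J3) as H2.
  pose proof (lip_hcurve_concat m _ _ (2 * (d + Rabs th * k * rho)) (2 * (d + Rabs th * 1 * rho)) _ _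
    ltac:(nra) ltac:(nra) H1 H2 ltac:(rewrite concat_1, concat_0; exact J2)) as H3.
  unfold loop_curve; rewrite loop_rotated_norm; eexists; eapply lip_hcurve_weaken; [|exact H3].
  rewrite Rmult_assoc, loop_outer_radius; apply Req_le; ring.
Qed.

End Loop.

Lemma lip_hcurve_loop m xb yb tb d tau : 0 <= m -> 0 < norm2 xb yb -> 0 <= d -> (0 < d \/ tau = 0) ->
  exists G bad, G 0 = (xb, yb, tb) /\ G 1 = (xb, yb, tb + tau) /\
    lip_hcurve m G (4 * (2 * d + Rabs (tau / (angular_rate m (norm2 xb yb)
                                         - angular_rate m (norm2 xb yb + d)))
                                  * (2 * norm2 xb yb + d))) bad.
Proof.
  intros hm Hrho Hd Hdtau.
  set (th := tau / (angular_rate m (norm2 xb yb) - angular_rate m (norm2 xb yb + d))).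
  assert (Hth : th * (angular_rate m (norm2 xb yb) - angular_rate m (norm2 xb yb + d)) = tau).
  { destruct Hdtau as [Hdp|Htau0]; [|unfold th; rewrite Htau0; unfold Rdiv; ring].
    unfold th; field; pose proof (angular_rate_lt_compat m (norm2 xb yb) (norm2 xb yb + d) hm ltac:(lra)); lra. }
  destruct (lip_hcurve_loop_curve m xb yb tb d th Hrho Hd) as [bad Hbad].
  exists (loop_curve m xb yb tb d th), bad; split; [apply loop_curve_0|split; [|exact Hbad]].
  rewrite loop_curve_1 by auto; rewrite Hth; reflexivity.
Qed.

Lemma angular_rate_Rpower m tau : 0 <= m -> 0 < tau ->
  angular_rate m (Rpower tau (/ (2 * m + 2))) = tau.
Proof.
  intros hm Ht; set (d := Rpower tau (/ (2 * m + 2))).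
  assert (Hd : 0 < d) by apply exp_pos.
  unfold angular_rate, wrad; rewrite rpow_Rpower by auto.
  replace (d * d) with (Rpower d (INR 2)) by (rewrite Rpower_pow by exact Hd; simpl; ring).
  rewrite <- Rpower_plus; unfold d; rewrite Rpower_mult.
  replace (/ (2 * m + 2) * (2 * m + INR 2)) with 1 by (simpl; field; lra); apply Rpower_1; auto.
Qed.

Lemma loop_angle_le rb d gap tau : 0 < gap -> Rabs tau * (2 * rb + d) <= 3 * d * gap ->
  Rabs (tau / - gap) * (2 * rb + d) <= 3 * d.
Proof.
  intros Hg H; unfold Rdiv; rewrite Rabs_mult, Rabs_inv, Rabs_Ropp, (Rabs_right gap) by lra.
  apply Rmult_le_reg_r with gap; [lra|].
  replace (Rabs tau * / gap * (2 * rb + d) * gap) with (Rabs tau * (2 * rb + d)) by (field; lra); lra.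
Qed.

(* Loop size for a small vertical displacement: d = sqrt (|tau| / rb^(2m)) <= rb. *)
Lemma loop_size_small m rb tau : 0 <= m -> 0 < rb -> Rabs tau <= angular_rate m rb ->
  exists d, 0 <= d <= rb /\ wrad m rb * (d * d) = Rabs tau /\
    Rabs (tau / (angular_rate m rb - angular_rate m (rb + d))) * (2 * rb + d) <= 3 * d.
Proof.
  intros hm Hrb Hs; assert (HP : 0 < wrad m rb) by (apply rpow_gt0; auto).
  set (d := sqrt (Rabs tau / wrad m rb)).
  assert (Hd0 : 0 <= d) by apply sqrt_pos.
  assert (Hdd : d * d = Rabs tau / wrad m rb)
    by (apply sqrt_sqrt, Rdiv_le_0_compat; [apply Rabs_pos|auto]).
  assert (Htau : wrad m rb * (d * d) = Rabs tau) by (rewrite Hdd; field; lra).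
  assert (Hdrb : d <= rb) by (apply Rle_of_sqr_le; [lra|]; unfold angular_rate in Hs; nra).
  exists d; split; [split; [auto|auto]|split; [auto|]].
  destruct Hd0 as [Hdp|Hd0].
  2: { rewrite <- Hd0, Rmult_0_r in Htau; rewrite <- Hd0, Rplus_0_r, Rminus_diag_eq, Rdiv_0_r,
         Rabs_R0 by reflexivity; lra. }
  assert (Hgap : wrad m rb * (2 * rb * d) <= angular_rate m (rb + d) - angular_rate m rb).
  { unfold angular_rate; pose proof (wrad_le_compat m rb (rb + d) hm ltac:(lra)).
    assert (wrad m rb * ((rb + d) * (rb + d)) <= wrad m (rb + d) * ((rb + d) * (rb + d)))
      by (apply Rmult_le_compat_r; nra).
    nra. }
  assert (Hpos : 0 < wrad m rb * (2 * rb * d))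
    by (apply Rmult_lt_0_compat; [lra|apply Rmult_lt_0_compat; lra]).
  replace (angular_rate m rb - angular_rate m (rb + d))
    with (- (angular_rate m (rb + d) - angular_rate m rb)) by ring.
  apply loop_angle_le; [lra|].
  rewrite <- Htau.
  assert (3 * d * (wrad m rb * (2 * rb * d)) <= 3 * d * (angular_rate m (rb + d) - angular_rate m rb))
    by (apply Rmult_le_compat_l; lra).
  assert (wrad m rb * (d * d) * (2 * rb + d) <= wrad m rb * (d * d) * (3 * rb))
    by (apply Rmult_le_compat_l; nra).
  nra.
Qed.

(* Loop size for a large vertical displacement: d = |tau|^(1/(2m+2)) > rb. *)
Lemma loop_size_large m rb tau : 0 <= m -> 0 < rb -> angular_rate m rb < Rabs tau ->
  exists d, rb < d /\ angular_rate m d = Rabs tau /\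
    Rabs (tau / (angular_rate m rb - angular_rate m (rb + d))) * (2 * rb + d) <= 3 * d.
Proof.
  intros hm Hrb Hl; pose proof (angular_rate_ge0 m rb).
  set (d := Rpower (Rabs tau) (/ (2 * m + 2))).
  assert (Hd : 0 < d) by apply exp_pos.
  assert (HfR : angular_rate m d = Rabs tau) by (apply angular_rate_Rpower; auto; lra).
  assert (Hdrb : rb < d).
  { destruct (Rlt_le_dec rb d); auto.
    pose proof (angular_rate_le_compat m d rb hm ltac:(lra)); lra. }
  exists d; split; [auto|split; [auto|]].
  assert (Hgap : angular_rate m d <= angular_rate m (rb + d) - angular_rate m rb).
  { unfold angular_rate.
    pose proof (wrad_le_compat m d (rb + d) hm ltac:(lra)).
    pose proof (wrad_le_compat m rb (rb + d) hm ltac:(lra)).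
    pose proof (wrad_ge0 m d); pose proof (wrad_ge0 m rb).
    assert (wrad m (rb + d) * (d * d) <= wrad m (rb + d) * ((rb + d) * (rb + d)) - wrad m (rb + d) * (rb * rb))
      by (rewrite <- Rmult_minus_distr_l; apply Rmult_le_compat_l; nra).
    nra. }
  replace (angular_rate m rb - angular_rate m (rb + d))
    with (- (angular_rate m (rb + d) - angular_rate m rb)) by ring.
  apply loop_angle_le; [lra|nra].
Qed.

Lemma vertical_loop m xb yb tb tau : 0 <= m -> 0 < norm2 xb yb ->
  exists d G bad, 0 <= d /\ G 0 = (xb, yb, tb) /\ G 1 = (xb, yb, tb + tau) /\
    lip_hcurve m G (20 * d) bad /\ wrad m (norm2 xb yb) * (d * d) <= Rabs tau /\
    (d <= norm2 xb yb \/ angular_rate m d <= Rabs tau).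
Proof.
  intros hm Hrho; set (rho := norm2 xb yb) in *.
  assert (Hloop : forall d, 0 <= d -> (0 < d \/ tau = 0) ->
    Rabs (tau / (angular_rate m rho - angular_rate m (rho + d))) * (2 * rho + d) <= 3 * d ->
    exists G bad, G 0 = (xb, yb, tb) /\ G 1 = (xb, yb, tb + tau) /\ lip_hcurve m G (20 * d) bad).
  { intros d Hd Hdtau Hth.
    destruct (lip_hcurve_loop m xb yb tb d tau hm Hrho Hd Hdtau) as [G [bad [H0 [H1 HG]]]].
    exists G, bad; split; [|split]; auto.
    eapply lip_hcurve_weaken; [|exact HG]; fold rho; lra. }
  destruct (Rle_dec (Rabs tau) (angular_rate m rho)) as [Hs|Hl].
  - destruct (loop_size_small m rho tau hm Hrho Hs) as [d [Hd [Htau Hth]]].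
    assert (Hdtau : 0 < d \/ tau = 0).
    { destruct (Req_dec d 0) as [Hd0|Hd0]; [right|left; lra].
      rewrite Hd0, Rmult_0_r in Htau; destruct (Req_dec tau 0); auto; pose proof (Rabs_pos_lt tau); lra. }
    destruct (Hloop d ltac:(lra) Hdtau Hth) as [G [bad [H0 [H1 HG]]]].
    exists d, G, bad; split; [lra|split; [|split; [|split; [|split]]]]; auto; lra.
  - destruct (loop_size_large m rho tau hm Hrho ltac:(lra)) as [d [Hd [HfR Hth]]].
    destruct (Hloop d ltac:(lra) ltac:(left; lra) Hth) as [G [bad [H0 [H1 HG]]]].
    exists d, G, bad; split; [lra|split; [|split; [|split; [|split]]]]; auto; [|right; lra].
    rewrite <- HfR; unfold angular_rate; apply Rmult_le_compat_r; [nra|apply wrad_le_compat; lra].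
Qed.

Lemma hcurve_x_segment_loop m x y T u v o1 o2 : 0 <= m ->
  (forall w, derivable_pt_lim T w (w2m m (x + w) y * y)) -> 0 < norm2 (x + v) y ->
  exists d G, 0 <= d /\ hcurve m (x + u, y, T u + o1) (x + v, y, T v + o2) G /\
    length_le G (2 * (Rabs (v - u) + 20 * d)) /\
    wrad m (norm2 (x + v) y) * (d * d) <= Rabs (o2 - o1) /\
    (d <= norm2 (x + v) y \/ angular_rate m d <= Rabs (o2 - o1)).
Proof.
  intros hm HT Hrho.
  destruct (vertical_loop m (x + v) y (T v + o1) (o2 - o1) hm Hrho)
    as [d [G [bad [Hd [HG0 [HG1 [HG [Hd2 Hd3]]]]]]]].
  pose proof (lip_hcurve_concat m _ _ _ (20 * d) _ _ (Rabs_pos (v - u)) ltac:(lra)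
    (lip_hcurve_x_segment m x y T o1 u v hm HT) HG
    ltac:(rewrite HG0; unfold x_segment; apply pt_eq; [ring|reflexivity|do 2 f_equal; ring])) as Hcat.
  destruct (lip_hcurve_hcurve _ _ (2 * (Rabs (v - u) + 20 * d)) _
    ltac:(pose proof (Rabs_pos (v - u)); lra) Hcat) as [Hh Hl].
  exists d, (concat (x_segment x y T o1 u v) G); split; [auto|split; [|split; auto]].
  split; [exact Hh|split].
  - rewrite concat_0; unfold x_segment; apply pt_eq; [ring|reflexivity|do 2 f_equal; ring].
  - rewrite concat_1, HG1; apply pt_eq; ring.
Qed.

(** * Derivative bounds for phi and ZF *)

Lemma Rabs_le_Rmax_between u v s : Rmin u v <= s <= Rmax u v -> Rabs s <= Rmax (Rabs u) (Rabs v).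
Proof.
  intros [H1 H2].
  pose proof (Rle_abs u); pose proof (Rle_abs (- u)); pose proof (Rle_abs v); pose proof (Rle_abs (- v)).
  rewrite Rabs_Ropp in *.
  pose proof (Rmax_l (Rabs u) (Rabs v)); pose proof (Rmax_r (Rabs u) (Rabs v)).
  apply Rabs_le; unfold Rmin, Rmax in H1, H2; destruct (Rle_dec u v); split; lra.
Qed.

Lemma Rabs_sub_le_between u v s : Rmin u v <= s <= Rmax u v -> Rabs (s - u) <= Rabs (v - u).
Proof.
  intros [H1 H2]; unfold Rmin, Rmax in *; destruct (Rle_dec u v).
  - rewrite !Rabs_right by lra; lra.
  - rewrite !Rabs_left1 by lra; lra.
Qed.

Lemma box_lipschitz_of_partials (f fx fy : R -> R -> R) K R0 x y x' y' :
  (forall u v, derivable_pt_lim (fun u => f u v) u (fx u v)) ->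
  (forall u v, derivable_pt_lim (fun v => f u v) v (fy u v)) ->
  (forall u v, Rabs u <= R0 -> Rabs v <= R0 -> Rabs (fx u v) <= K /\ Rabs (fy u v) <= K) ->
  Rabs x <= R0 -> Rabs y <= R0 -> Rabs x' <= R0 -> Rabs y' <= R0 ->
  Rabs (f x' y' - f x y) <= K * (Rabs (x' - x) + Rabs (y' - y)).
Proof.
  intros Hx Hy HB B1 B2 B3 B4.
  assert (Hbox : forall a b s, Rabs a <= R0 -> Rabs b <= R0 -> Rmin a b <= s <= Rmax a b -> Rabs s <= R0)
    by (intros a b s Ha Hb Hs; eapply Rle_trans; [apply (Rabs_le_Rmax_between a b s Hs)|apply Rmax_lub; auto]).
  pose proof (Rabs_incr_le_of_deriv (fun u => f u y') (fun u => fx u y') x x' K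
    (fun s _ => Hx s y') (fun s Hs => proj1 (HB s y' (Hbox x x' s B1 B3 Hs) B4))).
  pose proof (Rabs_incr_le_of_deriv (fun v => f x v) (fun v => fy x v) y y' K
    (fun s _ => Hy x s) (fun s Hs => proj2 (HB x s B1 (Hbox y y' s B2 B4 Hs)))).
  replace (f x' y' - f x y) with ((f x' y' - f x y') + (f x y' - f x y)) by ring.
  eapply Rle_trans; [apply Rabs_triang|]; simpl in *; lra.
Qed.

Lemma norm2_le_box x y R0 : Rabs x <= R0 -> Rabs y <= R0 -> norm2 x y <= 2 * R0.
Proof. intros; pose proof (norm2_le_Rabs_add x y); lra. Qed.

Lemma wrad_lipschitz m r0 R a b : 0 <= m -> 0 < r0 -> r0 <= a <= R -> r0 <= b <= R ->
  Rabs (wrad m b - wrad m a) <= (2 * m * wrad m R / r0) * Rabs (b - a).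
Proof.
  intros hm Hr0 Ha Hb.
  apply (Rabs_incr_le_of_deriv (wrad m) (fun s => 2 * m * Rpower s (2 * m - 1))).
  - intros s Hs; assert (Hs0 : r0 <= s) by (unfold Rmin, Rmax in Hs; destruct (Rle_dec a b); lra).
    apply (derivable_pt_lim_locally_ext (fun s => Rpower s (2 * m)) (wrad m) s (s / 2) (2 * s)).
    + lra.
    + intros y Hy; unfold wrad; rewrite rpow_Rpower; lra.
    + apply derivable_pt_lim_power; lra.
  - intros s Hs; assert (Hs0 : r0 <= s <= R) by (unfold Rmin, Rmax in Hs; destruct (Rle_dec a b); lra).
    assert (E : Rpower s (2 * m - 1) = wrad m s / s).
    { unfold wrad; rewrite rpow_Rpower by lra; replace (2 * m) with ((2 * m - 1) + 1) at 2 by ring.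
      rewrite Rpower_plus, Rpower_1 by lra; field; lra. }
    rewrite E; pose proof (wrad_le_compat m s R hm ltac:(lra)); pose proof (wrad_ge0 m s).
    assert (wrad m s / s <= wrad m R / r0).
    { unfold Rdiv; apply Rmult_le_compat; try lra; [left; apply Rinv_0_lt_compat; lra|apply Rinv_le_contravar; lra]. }
    assert (0 <= wrad m s / s) by (apply Rdiv_le_0_compat; lra).
    rewrite Rabs_right by (apply Rle_ge; apply Rmult_le_pos; lra).
    replace (2 * m * wrad m R / r0) with (2 * m * (wrad m R / r0)) by (unfold Rdiv; ring).
    apply Rmult_le_compat_l; lra.
Qed.

Section DerivativeBounds.

Variables (m C : R) (phi : R -> R -> R) (D : list bool -> R -> R -> R).
Hypotheses (hm : 0 <= m) (hC : 0 <= C) (hsmooth : smooth_family phi D).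
Hypothesis hD2 : forall w x y, length w = 2%nat -> Rabs (D w x y) <= C * rpow (norm2 x y) (2 * m).
Hypothesis hD1 : forall w x y, length w = 1%nat -> Rabs (D w x y) <= C * rpow (norm2 x y) (2 * m + 1).

Lemma D1_le b x y : Rabs (D (b :: nil) x y) <= C * (wrad m (norm2 x y) * norm2 x y).
Proof. unfold wrad; rewrite <- rpow_plus_1 by apply norm2_ge0; apply hD1; reflexivity. Qed.

Lemma phi_box_lipschitz R0 x y x' y' :
  Rabs x <= R0 -> Rabs y <= R0 -> Rabs x' <= R0 -> Rabs y' <= R0 ->
  Rabs (phi x' y' - phi x y) <= C * (wrad m (2 * R0) * (2 * R0)) * (Rabs (x' - x) + Rabs (y' - y)).
Proof.
  destruct hsmooth as [H0 [Hx [Hy _]]]; intros; rewrite <- H0.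
  apply (box_lipschitz_of_partials (D nil) (D (false :: nil)) (D (true :: nil)) _ R0); auto.
  intros u v Hu Hv.
  assert (Hb : C * (wrad m (norm2 u v) * norm2 u v) <= C * (wrad m (2 * R0) * (2 * R0))).
  { apply Rmult_le_compat_l; auto; apply wrad_mul_le_compat; auto.
    split; [apply norm2_ge0|apply norm2_le_box; auto]. }
  split; (eapply Rle_trans; [apply D1_le|exact Hb]).
Qed.

Lemma normZF_le x y : normZF m D x y <= (2 * C + 2) * (wrad m (norm2 x y) * norm2 x y).
Proof.
  unfold normZF, XF, YF; eapply Rle_trans; [apply norm2_le_Rabs_add|].
  pose proof (D1_le false x y); pose proof (D1_le true x y).
  assert (Hw : 0 <= w2m m x y) by apply rpow_ge0.
  assert (Hy : Rabs (w2m m x y * y) <= wrad m (norm2 x y) * norm2 x y)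
    by (rewrite Rabs_mult, Rabs_right by lra; apply Rmult_le_compat_l; auto; apply Rabs_le_norm2_r).
  assert (Hx : Rabs (w2m m x y * x) <= wrad m (norm2 x y) * norm2 x y)
    by (rewrite Rabs_mult, Rabs_right by lra; apply Rmult_le_compat_l; auto; apply Rabs_le_norm2_l).
  pose proof (Rabs_triang (D (false :: nil) x y) (- (w2m m x y * y))); rewrite Rabs_Ropp in *.
  pose proof (Rabs_triang (D (true :: nil) x y) (w2m m x y * x)).
  unfold Rminus; lra.
Qed.

Lemma w2m_mul_lipschitz R0 r0 x y x' y' q q' : 0 < r0 ->
  Rabs x <= R0 -> Rabs y <= R0 -> Rabs x' <= R0 -> Rabs y' <= R0 ->
  r0 <= norm2 x y -> r0 <= norm2 x' y' -> Rabs q' <= R0 ->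
  Rabs (w2m m x' y' * q' - w2m m x y * q) <=
    (2 * m * wrad m (2 * R0) / r0) * (Rabs (x' - x) + Rabs (y' - y)) * R0
    + wrad m (2 * R0) * Rabs (q' - q).
Proof.
  intros Hr0 B1 B2 B3 B4 N1 N2 Bq.
  pose proof (norm2_le_box x y R0 B1 B2); pose proof (norm2_le_box x' y' R0 B3 B4).
  pose proof (wrad_lipschitz m r0 (2 * R0) (norm2 x y) (norm2 x' y') hm Hr0 ltac:(lra) ltac:(lra)) as HL.
  change (w2m m x' y') with (wrad m (norm2 x' y')); change (w2m m x y) with (wrad m (norm2 x y)).
  replace (wrad m (norm2 x' y') * q' - wrad m (norm2 x y) * q) with
    ((wrad m (norm2 x' y') - wrad m (norm2 x y)) * q' + wrad m (norm2 x y) * (q' - q)) by ring.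
  eapply Rle_trans; [apply Rabs_triang|]; rewrite !Rabs_mult.
  assert (Hn : Rabs (norm2 x' y' - norm2 x y) <= Rabs (x' - x) + Rabs (y' - y))
    by (eapply Rle_trans; [apply norm2_triang_rev|apply norm2_le_Rabs_add]).
  assert (Hc : 0 <= 2 * m * wrad m (2 * R0) / r0)
    by (apply Rdiv_le_0_compat; [apply Rmult_le_pos; [lra|apply wrad_ge0]|lra]).
  apply Rplus_le_compat.
  - apply Rmult_le_compat; auto using Rabs_pos.
    eapply Rle_trans; [apply HL|apply Rmult_le_compat_l; auto].
  - rewrite Rabs_right by (apply Rle_ge, wrad_ge0); apply Rmult_le_compat_r; [apply Rabs_pos|].
    apply wrad_le_compat; auto; split; [apply norm2_ge0|lra].
Qed.

Definition ZF_box_lip_const (R0 r0 : R) : R :=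
  C * wrad m (2 * R0) + (2 * m * wrad m (2 * R0) / r0) * R0 + wrad m (2 * R0).

Lemma XF_YF_box_lipschitz R0 r0 x y x' y' : 0 < r0 ->
  Rabs x <= R0 -> Rabs y <= R0 -> Rabs x' <= R0 -> Rabs y' <= R0 ->
  r0 <= norm2 x y -> r0 <= norm2 x' y' ->
  Rabs (XF m D x' y' - XF m D x y) <= ZF_box_lip_const R0 r0 * (Rabs (x' - x) + Rabs (y' - y)) /\
  Rabs (YF m D x' y' - YF m D x y) <= ZF_box_lip_const R0 r0 * (Rabs (x' - x) + Rabs (y' - y)).
Proof.
  destruct hsmooth as [_ [Hx [Hy _]]]; intros Hr0 B1 B2 B3 B4 N1 N2.
  assert (HD : forall b, Rabs (D (b :: nil) x' y' - D (b :: nil) x y)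
                         <= C * wrad m (2 * R0) * (Rabs (x' - x) + Rabs (y' - y))).
  { intros b.
    apply (box_lipschitz_of_partials (D (b :: nil)) (D (false :: b :: nil)) (D (true :: b :: nil)) _ R0); auto.
    intros u v Hu Hv.
    assert (Hb : C * rpow (norm2 u v) (2 * m) <= C * wrad m (2 * R0)).
    { apply Rmult_le_compat_l; auto; apply wrad_le_compat; auto.
      split; [apply norm2_ge0|apply norm2_le_box; auto]. }
    split; (eapply Rle_trans; [apply hD2; reflexivity|exact Hb]). }
  pose proof (Rabs_pos (x' - x)); pose proof (Rabs_pos (y' - y)); pose proof (wrad_ge0 m (2 * R0)).
  assert (Hsplit : forall a b a' b', Rabs ((a' - b') - (a - b)) <= Rabs (a' - a) + Rabs (b' - b)).
  { intros; replace ((a' - b') - (a - b)) with ((a' - a) + - (b' - b)) by ring.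
    eapply Rle_trans; [apply Rabs_triang|rewrite Rabs_Ropp; lra]. }
  assert (HK : ZF_box_lip_const R0 r0 * (Rabs (x' - x) + Rabs (y' - y)) =
    C * wrad m (2 * R0) * (Rabs (x' - x) + Rabs (y' - y))
    + 2 * m * wrad m (2 * R0) / r0 * (Rabs (x' - x) + Rabs (y' - y)) * R0
    + wrad m (2 * R0) * (Rabs (x' - x) + Rabs (y' - y))) by (unfold ZF_box_lip_const; ring).
  split.
  - pose proof (w2m_mul_lipschitz R0 r0 x y x' y' y y' Hr0 B1 B2 B3 B4 N1 N2 B4).
    pose proof (HD false); unfold XF; eapply Rle_trans; [apply Hsplit|]; nra.
  - pose proof (w2m_mul_lipschitz R0 r0 x y x' y' x x' Hr0 B1 B2 B3 B4 N1 N2 B3).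
    pose proof (HD true); unfold YF.
    replace (D (true :: nil) x' y' + w2m m x' y' * x' - (D (true :: nil) x y + w2m m x y * x))
      with ((D (true :: nil) x' y' - D (true :: nil) x y) + (w2m m x' y' * x' - w2m m x y * x)) by ring.
    eapply Rle_trans; [apply Rabs_triang|]; nra.
Qed.

Lemma ZF_near_lipschitz rho z1 z2 w1 w2 : 0 < rho ->
  rho / 2 <= norm2 z1 z2 <= 3 * rho / 2 -> norm2 (w1 - z1) (w2 - z2) <= rho / 4 ->
  Rabs (normZF m D w1 w2 - normZF m D z1 z2)
    <= (4 * rpow 4 (2 * m) * (C + 16 * m + 1)) * wrad m rho * norm2 (w1 - z1) (w2 - z2) /\
  Rabs (XF m D w1 w2 - XF m D z1 z2)
    <= (4 * rpow 4 (2 * m) * (C + 16 * m + 1)) * wrad m rho * norm2 (w1 - z1) (w2 - z2).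
Proof.
  intros Hr [Hz1 Hz2] Hw; set (n := norm2 (w1 - z1) (w2 - z2)) in *.
  pose proof (norm2_ge0 (w1 - z1) (w2 - z2)); fold n in H.
  pose proof (Rabs_le_norm2_l z1 z2); pose proof (Rabs_le_norm2_r z1 z2).
  pose proof (Rabs_le_norm2_l (w1 - z1) (w2 - z2)); pose proof (Rabs_le_norm2_r (w1 - z1) (w2 - z2)).
  fold n in H2, H3.
  pose proof (Rabs_triang_inv w1 z1); pose proof (Rabs_triang_inv w2 z2).
  assert (N2 : rho / 4 <= norm2 w1 w2).
  { pose proof (norm2_triang_rev w1 w2 z1 z2); fold n in H6.
    pose proof (Rle_abs (- (norm2 w1 w2 - norm2 z1 z2))); rewrite Rabs_Ropp in H7; lra. }
  assert (HK : ZF_box_lip_const (2 * rho) (rho / 4) = rpow 4 (2 * m) * wrad m rho * (C + 16 * m + 1)).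
  { unfold ZF_box_lip_const, wrad; replace (2 * (2 * rho)) with (4 * rho) by ring.
    rewrite rpow_mult_distr by lra; field; lra. }
  assert (HKp : 0 <= ZF_box_lip_const (2 * rho) (rho / 4))
    by (rewrite HK; apply Rmult_le_pos; [apply Rmult_le_pos; apply rpow_ge0|lra]).
  destruct (XF_YF_box_lipschitz (2 * rho) (rho / 4) z1 z2 w1 w2) as [HX HY]; try lra.
  assert (Hs : ZF_box_lip_const (2 * rho) (rho / 4) * (Rabs (w1 - z1) + Rabs (w2 - z2))
               <= ZF_box_lip_const (2 * rho) (rho / 4) * (2 * n)) by (apply Rmult_le_compat_l; lra).
  assert (HZ : Rabs (normZF m D w1 w2 - normZF m D z1 z2)
               <= 2 * (ZF_box_lip_const (2 * rho) (rho / 4) * (Rabs (w1 - z1) + Rabs (w2 - z2)))).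
  { unfold normZF; eapply Rle_trans; [apply norm2_triang_rev|].
    eapply Rle_trans; [apply norm2_le_Rabs_add|lra]. }
  rewrite HK in *; split; nra.
Qed.

End DerivativeBounds.

(** * The height above the graph along horizontal curves *)

Lemma MVT_between f f' u v : (forall s, derivable_pt_lim f s (f' s)) ->
  exists xi, Rmin u v <= xi <= Rmax u v /\ f v - f u = f' xi * (v - u).
Proof.
  intros Hd; destruct (Rtotal_order u v) as [H|[H|H]].
  - destruct (MVT_cor2 f f' u v H (fun c _ => Hd c)) as [c [Hc1 Hc2]]; exists c.
    rewrite Rmin_left, Rmax_right by lra; split; [lra|auto].
  - subst; exists v; rewrite Rmin_left, Rmax_left by lra; split; [lra|ring].
  - destruct (MVT_cor2 f f' v u H (fun c _ => Hd c)) as [c [Hc1 Hc2]]; exists c.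
    rewrite Rmin_right, Rmax_left by lra; split; lra.
Qed.

Lemma phi_first_order phi D x0 y0 : smooth_family phi D -> forall eps, 0 < eps ->
  exists d, 0 < d /\ forall x y, norm2 (x - x0) (y - y0) < d ->
    Rabs (phi x y - phi x0 y0 - D (false :: nil) x0 y0 * (x - x0) - D (true :: nil) x0 y0 * (y - y0))
      <= eps * (Rabs (x - x0) + Rabs (y - y0)).
Proof.
  intros [H0 [Hx [Hy Hc]]] eps Heps.
  destruct (Hc (false :: nil) x0 y0 eps Heps) as [d1 [Hd1 H1]].
  destruct (Hc (true :: nil) x0 y0 eps Heps) as [d2 [Hd2 H2]].
  exists (Rmin d1 d2); split; [apply Rmin_pos; auto|].
  intros x y Hxy; rewrite <- H0.
  pose proof (Rmin_l d1 d2); pose proof (Rmin_r d1 d2).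
  destruct (MVT_between (fun u => D nil u y) (fun u => D (false :: nil) u y) x0 x (fun s => Hx nil s y))
    as [xi [Hxi E1]].
  destruct (MVT_between (fun v => D nil x0 v) (fun v => D (true :: nil) x0 v) y0 y (fun s => Hy nil x0 s))
    as [eta [Heta E2]].
  assert (A1 : Rabs (D (false :: nil) xi y - D (false :: nil) x0 y0) < eps).
  { apply H1, Rle_lt_trans with (norm2 (x - x0) (y - y0)); [|lra].
    apply norm2_le_compat; [|apply Rle_refl].
    apply Rabs_sub_le_between; auto. }
  assert (A2 : Rabs (D (true :: nil) x0 eta - D (true :: nil) x0 y0) < eps).
  { apply H2, Rle_lt_trans with (norm2 (x - x0) (y - y0)); [|lra].
    apply norm2_le_compat.
    - unfold Rminus; rewrite Rplus_opp_r, Rabs_R0; apply Rabs_pos.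
    - apply Rabs_sub_le_between; auto. }
  replace (D nil x y - D nil x0 y0 - D (false :: nil) x0 y0 * (x - x0) - D (true :: nil) x0 y0 * (y - y0))
    with ((D (false :: nil) xi y - D (false :: nil) x0 y0) * (x - x0)
          + (D (true :: nil) x0 eta - D (true :: nil) x0 y0) * (y - y0))
    by (simpl in E1, E2; lra).
  eapply Rle_trans; [apply Rabs_triang|]; rewrite !Rabs_mult.
  pose proof (Rabs_pos (x - x0)); pose proof (Rabs_pos (y - y0)); nra.
Qed.

Lemma derivable_pt_lim_first_order f s l : derivable_pt_lim f s l -> forall eps, 0 < eps ->
  exists d, 0 < d /\ forall s', Rabs (s' - s) < d ->
    Rabs (f s' - f s - l * (s' - s)) <= eps * Rabs (s' - s).
Proof.
  intros H eps Heps; destruct (H eps Heps) as [d Hd]; exists d; split; [apply cond_pos|].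
  intros s' Hs'; destruct (Req_dec s' s) as [->|Hne].
  - unfold Rminus; rewrite !Rplus_opp_r, Rmult_0_r, Rplus_opp_r, Rabs_R0; lra.
  - specialize (Hd (s' - s) ltac:(lra) Hs'); replace (s + (s' - s)) with s' in Hd by ring.
    replace (f s' - f s - l * (s' - s)) with (((f s' - f s) / (s' - s) - l) * (s' - s)) by (field; lra).
    rewrite Rabs_mult; apply Rmult_le_compat_r; [apply Rabs_pos|lra].
Qed.

Lemma first_order_3 f1 f2 f3 s l1 l2 l3 :
  derivable_pt_lim f1 s l1 -> derivable_pt_lim f2 s l2 -> derivable_pt_lim f3 s l3 ->
  forall e, 0 < e -> exists d, 0 < d /\ forall s', Rabs (s' - s) < d ->
    Rabs (f1 s' - f1 s - l1 * (s' - s)) <= e * Rabs (s' - s) /\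
    Rabs (f2 s' - f2 s - l2 * (s' - s)) <= e * Rabs (s' - s) /\
    Rabs (f3 s' - f3 s - l3 * (s' - s)) <= e * Rabs (s' - s).
Proof.
  intros H1 H2 H3 e He.
  destruct (derivable_pt_lim_first_order _ _ _ H1 e He) as [d1 [Hd1 E1]].
  destruct (derivable_pt_lim_first_order _ _ _ H2 e He) as [d2 [Hd2 E2]].
  destruct (derivable_pt_lim_first_order _ _ _ H3 e He) as [d3 [Hd3 E3]].
  exists (Rmin d1 (Rmin d2 d3)); split; [repeat apply Rmin_pos; auto|intros s' Hs'].
  pose proof (Rmin_l d1 (Rmin d2 d3)); pose proof (Rmin_r d1 (Rmin d2 d3));
    pose proof (Rmin_l d2 d3); pose proof (Rmin_r d2 d3).
  repeat split; [apply E1|apply E2|apply E3]; lra.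
Qed.

Lemma Rabs_add_le_of_first_order Dx Dy al be h e : e <= 1 ->
  Rabs (Dx - al * h) <= e * Rabs h -> Rabs (Dy - be * h) <= e * Rabs h ->
  Rabs Dx + Rabs Dy <= (Rabs al + Rabs be + 2) * Rabs h.
Proof.
  intros He Ex Ey; pose proof (Rabs_pos h).
  pose proof (Rabs_triang (al * h) (Dx - al * h)); pose proof (Rabs_triang (be * h) (Dy - be * h)).
  replace (al * h + (Dx - al * h)) with Dx in * by ring; replace (be * h + (Dy - be * h)) with Dy in * by ring.
  rewrite !Rabs_mult in *; nra.
Qed.

Lemma phi_first_order_scaled phi D x0 y0 B : smooth_family phi D -> 0 < B ->
  forall eps, 0 < eps -> exists d, 0 < d /\ forall x y h,
    Rabs (x - x0) + Rabs (y - y0) <= B * Rabs h -> Rabs h < d ->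
    Rabs (phi x y - phi x0 y0 - D (false :: nil) x0 y0 * (x - x0) - D (true :: nil) x0 y0 * (y - y0))
      <= eps * Rabs h.
Proof.
  intros HS HB eps Heps.
  destruct (phi_first_order phi D x0 y0 HS (eps / B) ltac:(apply Rdiv_lt_0_compat; lra)) as [dp [Hdp Hphi]].
  exists (dp / B); split; [apply Rdiv_lt_0_compat; lra|intros x y h Hxy Hh].
  eapply Rle_trans; [apply Hphi|].
  - eapply Rle_lt_trans; [apply norm2_le_Rabs_add|].
    apply Rle_lt_trans with (B * Rabs h); [exact Hxy|].
    apply Rmult_lt_reg_r with (/ B); [apply Rinv_0_lt_compat; lra|].
    replace (B * Rabs h * / B) with (Rabs h) by (field; lra); unfold Rdiv in *; lra.
  - replace (eps / B * (Rabs (x - x0) + Rabs (y - y0))) with (eps * ((Rabs (x - x0) + Rabs (y - y0)) / B))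
      by (field; lra).
    apply Rmult_le_compat_l; [lra|].
    apply Rmult_le_reg_r with B; [lra|].
    replace ((Rabs (x - x0) + Rabs (y - y0)) / B * B) with (Rabs (x - x0) + Rabs (y - y0)) by (field; lra); lra.
Qed.

Lemma Rabs_height_incr_le X Y a b Dx Dy ex ey et ep e h eps :
  Rabs ex <= e * Rabs h -> Rabs ey <= e * Rabs h -> Rabs et <= e * Rabs h ->
  e * (Rabs a + Rabs b + 1) <= eps / 2 -> Rabs ep <= eps / 2 * Rabs h ->
  Rabs (- (X * Dx + Y * Dy) + a * ex + b * ey + et - ep) <= norm2 X Y * norm2 Dx Dy + eps * Rabs h.
Proof.
  intros Ex Ey Et He Hep; pose proof (Rabs_pos h).
  pose proof (Rabs_triang (- (X * Dx + Y * Dy) + a * ex + b * ey + et) (- ep)).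
  pose proof (Rabs_triang (- (X * Dx + Y * Dy) + a * ex + b * ey) et).
  pose proof (Rabs_triang (- (X * Dx + Y * Dy) + a * ex) (b * ey)).
  pose proof (Rabs_triang (- (X * Dx + Y * Dy)) (a * ex)).
  pose proof (Rabs_dot_le_norm2 X Y Dx Dy).
  assert (Rabs a * Rabs ex <= Rabs a * (e * Rabs h)) by (apply Rmult_le_compat_l; [apply Rabs_pos|exact Ex]).
  assert (Rabs b * Rabs ey <= Rabs b * (e * Rabs h)) by (apply Rmult_le_compat_l; [apply Rabs_pos|exact Ey]).
  assert (e * (Rabs a + Rabs b + 1) * Rabs h <= eps / 2 * Rabs h) by (apply Rmult_le_compat_r; auto).
  rewrite !Rabs_Ropp, !Rabs_mult in *; unfold Rminus; nra.
Qed.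

(* The t-velocity W (al y - be x) and the gradient of phi combine exactly into
   -(XF, YF) . dz, so only first-order error terms remain. *)
Lemma height_first_order m phi D (g : R -> pt) s al be : smooth_family phi D ->
  derivable_pt_lim (fun u => px (g u)) s al -> derivable_pt_lim (fun u => py (g u)) s be ->
  derivable_pt_lim (fun u => pt3 (g u)) s (w2m m (px (g s)) (py (g s)) * (al * py (g s) - be * px (g s))) ->
  forall eps, 0 < eps -> exists d, 0 < d /\ forall s', Rabs (s' - s) < d ->
    Rabs ((pt3 (g s') - phi (px (g s')) (py (g s'))) - (pt3 (g s) - phi (px (g s)) (py (g s)))) <=
    normZF m D (px (g s)) (py (g s)) * hdist (g s) (g s') + eps * Rabs (s' - s).
Proof.
  intros HS Hx Hy Ht eps Heps.
  set (x0 := px (g s)) in *; set (y0 := py (g s)) in *; set (W := w2m m x0 y0) in *.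
  set (A := Rabs (- (W * y0)) + Rabs (W * x0) + 1); set (B := Rabs al + Rabs be + 2).
  assert (HA : 0 < A) by (unfold A; pose proof (Rabs_pos (- (W * y0))); pose proof (Rabs_pos (W * x0)); lra).
  assert (HB : 0 < B) by (unfold B; pose proof (Rabs_pos al); pose proof (Rabs_pos be); lra).
  set (e2 := Rmin 1 (eps / (2 * A))).
  assert (He2 : 0 < e2) by (apply Rmin_pos; [lra|apply Rdiv_lt_0_compat; lra]).
  assert (He2A : e2 * A <= eps / 2).
  { pose proof (Rmin_r 1 (eps / (2 * A))) as H; fold e2 in H.
    apply Rmult_le_compat_r with (r := A) in H; [|lra].
    replace (eps / (2 * A) * A) with (eps / 2) in H by (field; lra); exact H. }
  destruct (phi_first_order_scaled phi D x0 y0 B HS HB (eps / 2) ltac:(lra)) as [dp [Hdp Hphi]].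
  destruct (first_order_3 _ _ _ _ _ _ _ Hx Hy Ht e2 He2) as [dc [Hdc Hcurve]].
  exists (Rmin dc dp); split; [apply Rmin_pos; lra|intros s' Hs'].
  pose proof (Rmin_l dc dp); pose proof (Rmin_r dc dp).
  destruct (Hcurve s' ltac:(lra)) as [Ex [Ey Et]]; fold x0 in Ex; fold y0 in Ey.
  set (h := s' - s) in *.
  set (Dx := px (g s') - x0) in *; set (Dy := py (g s') - y0) in *.
  pose proof (Rabs_add_le_of_first_order Dx Dy al be h e2 (Rmin_l _ _) Ex Ey) as HDs; fold B in HDs.
  pose proof (Hphi (px (g s')) (py (g s')) h HDs ltac:(lra)) as Hep; fold Dx Dy in Hep.
  replace (pt3 (g s') - phi (px (g s')) (py (g s')) - (pt3 (g s) - phi x0 y0))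
    with (- (XF m D x0 y0 * Dx + YF m D x0 y0 * Dy) + - (W * y0) * (Dx - al * h) + (W * x0) * (Dy - be * h)
          + (pt3 (g s') - pt3 (g s) - W * (al * y0 - be * x0) * h)
          - (phi (px (g s')) (py (g s')) - phi x0 y0 - D (false :: nil) x0 y0 * Dx - D (true :: nil) x0 y0 * Dy))
    by (unfold XF, YF; fold W; ring).
  unfold normZF, hdist; fold x0 y0 Dx Dy.
  apply Rabs_height_incr_le with e2; auto.
Qed.

Definition height (phi : R -> R -> R) (p : pt) : R := pt3 p - phi (px p) (py p).

Lemma abs_cont_of_incr_le f1 f2 f3 h K : 0 <= K ->
  abs_cont f1 0 1 -> abs_cont f2 0 1 -> abs_cont f3 0 1 ->
  (forall u v, 0 <= u <= 1 -> 0 <= v <= 1 ->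
     Rabs (h v - h u) <= K * (Rabs (f1 v - f1 u) + Rabs (f2 v - f2 u) + Rabs (f3 v - f3 u))) ->
  abs_cont h 0 1.
Proof.
  intros HK H1 H2 H3 Hh eps Heps.
  set (e := eps / (3 * (K + 1))).
  assert (He : 0 < e) by (unfold e; apply Rdiv_lt_0_compat; lra).
  destruct (H1 e He) as [d1 [Hd1 A1]]; destruct (H2 e He) as [d2 [Hd2 A2]]; destruct (H3 e He) as [d3 [Hd3 A3]].
  exists (Rmin d1 (Rmin d2 d3)); split; [repeat apply Rmin_pos; auto|].
  intros l Hl Hs; pose proof (Rmin_l d1 (Rmin d2 d3)); pose proof (Rmin_r d1 (Rmin d2 d3)).
  pose proof (Rmin_l d2 d3); pose proof (Rmin_r d2 d3).
  specialize (A1 l Hl ltac:(lra)); specialize (A2 l Hl ltac:(lra)); specialize (A3 l Hl ltac:(lra)).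
  assert (sum_incr h l <= K * (sum_incr f1 l + sum_incr f2 l + sum_incr f3 l)).
  { rewrite !sum_incr_pairs, <- !sum_pairs_plus, <- sum_pairs_scal; apply sum_pairs_le.
    intros p Hp; destruct (ordered_intervals_In _ _ _ _ Hl Hp) as [? [? ?]]; apply Hh; lra. }
  assert (K * (sum_incr f1 l + sum_incr f2 l + sum_incr f3 l) <= K * (3 * e)) by (apply Rmult_le_compat_l; lra).
  assert (K * (3 * e) < eps).
  { unfold e; replace (K * (3 * (eps / (3 * (K + 1))))) with (eps * (K / (K + 1))) by (field; lra).
    assert (K / (K + 1) < 1) by (apply Rmult_lt_reg_r with (K + 1); [lra|field_simplify; lra]).
    nra. }
  lra.
Qed.

Lemma length_le_hdist g L s : length_le g L -> 0 <= s <= 1 -> hdist (g 0) (g s) <= L.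
Proof.
  intros HL Hs; specialize (HL (s :: 1 :: nil) ltac:(simpl; repeat split; lra)); simpl in HL.
  pose proof (hdist_ge0 (g s) (g 1)); unfold hdist in *; lra.
Qed.

Lemma length_le_ge0 g L : length_le g L -> 0 <= L.
Proof.
  intros HL; pose proof (length_le_hdist g L 0 HL ltac:(lra)); pose proof (hdist_ge0 (g 0) (g 0)); lra.
Qed.

Section HeightAlongHorizontalCurves.

Variables (m C : R) (phi : R -> R -> R) (D : list bool -> R -> R -> R).
Hypotheses (hm : 0 <= m) (hC : 0 <= C) (hsmooth : smooth_family phi D).
Hypothesis hD1 : forall w x y, length w = 1%nat -> Rabs (D w x y) <= C * rpow (norm2 x y) (2 * m + 1).

Lemma height_abs_cont g L : horizontal m g -> length_le g L ->
  abs_cont (fun u => height phi (g u)) 0 1.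
Proof.
  intros [Ax [Ay [At _]]] HL.
  set (R0 := Rabs (px (g 0)) + Rabs (py (g 0)) + L).
  pose proof (length_le_ge0 g L HL) as HL0.
  assert (Hbox : forall u, 0 <= u <= 1 -> Rabs (px (g u)) <= R0 /\ Rabs (py (g u)) <= R0).
  { intros u Hu; pose proof (length_le_hdist g L u HL Hu) as H; unfold hdist in H.
    pose proof (Rabs_le_norm2_l (px (g u) - px (g 0)) (py (g u) - py (g 0))).
    pose proof (Rabs_le_norm2_r (px (g u) - px (g 0)) (py (g u) - py (g 0))).
    pose proof (Rabs_triang_inv (px (g u)) (px (g 0))); pose proof (Rabs_triang_inv (py (g u)) (py (g 0))).
    pose proof (Rabs_pos (px (g 0))); pose proof (Rabs_pos (py (g 0))); unfold R0; split; lra. }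
  set (K := C * (wrad m (2 * R0) * (2 * R0))).
  assert (HK : 0 <= K).
  { apply Rmult_le_pos; auto; apply Rmult_le_pos; [apply wrad_ge0|].
    unfold R0; pose proof (Rabs_pos (px (g 0))); pose proof (Rabs_pos (py (g 0))); lra. }
  apply (abs_cont_of_incr_le (fun u => pt3 (g u)) (fun u => px (g u)) (fun u => py (g u)) _ (K + 1));
    auto; [lra|].
  intros u v Hu Hv; unfold height.
  destruct (Hbox u Hu) as [B1 B2]; destruct (Hbox v Hv) as [B3 B4].
  pose proof (phi_box_lipschitz m C phi D hm hC hsmooth hD1 R0 _ _ _ _ B1 B2 B3 B4) as Hphi; fold K in Hphi.
  set (a := pt3 (g v) - pt3 (g u)) in *.
  set (b := phi (px (g v)) (py (g v)) - phi (px (g u)) (py (g u))) in *.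
  replace (pt3 (g v) - phi (px (g v)) (py (g v)) - (pt3 (g u) - phi (px (g u)) (py (g u)))) with (a - b)
    by (unfold a, b; ring).
  pose proof (Rabs_triang a (- b)); rewrite Rabs_Ropp in H.
  pose proof (Rabs_pos a); pose proof (Rabs_pos (px (g v) - px (g u))); pose proof (Rabs_pos (py (g v) - py (g u))).
  unfold Rminus at 1; nra.
Qed.

Lemma height_drop_le p q g L M : hcurve m p q g -> length_le g L -> 0 <= M ->
  (forall w1 w2, norm2 (w1 - px p) (w2 - py p) <= L -> normZF m D w1 w2 <= M) ->
  height phi q >= height phi p - M * L.
Proof.
  intros [Hh [Hg0 Hg1]] HL HM HZ.
  enough (Rabs (height phi (g 1) - height phi (g 0)) <= M * L)
    by (rewrite Hg0, Hg1 in H; pose proof (Rle_abs (- (height phi q - height phi p)));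
        rewrite Rabs_Ropp in H0; lra).
  apply (increment_le_of_dominated g (fun u => height phi (g u)) M HM L); auto;
    [eapply height_abs_cont; eauto|].
  destruct Hh as [_ [_ [_ [N [HN Hd]]]]]; exists N; split; auto.
  intros s Hs HNs eps Heps; destruct (Hd s Hs HNs) as [al [be [D1 [D2 D3]]]].
  destruct (height_first_order m phi D g s al be hsmooth D1 D2 D3 eps Heps) as [d [Hdp Hloc]].
  exists d; split; auto; intros s' Hs' Hss'.
  eapply Rle_trans; [apply Hloc; auto|].
  apply Rplus_le_compat_r, Rmult_le_compat_r; [apply hdist_ge0|].
  apply HZ; rewrite <- Hg0; apply length_le_hdist; auto; lra.
Qed.

End HeightAlongHorizontalCurves.

Lemma integral_curve_X_spec m x y t c : integral_curve_X m (x, y, t) c ->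
  (forall w, px (c w) = x + w) /\ (forall w, py (c w) = y) /\ pt3 (c 0) = t /\
  (forall w, derivable_pt_lim (fun u => pt3 (c u)) w (w2m m (x + w) y * y)).
Proof.
  intros [Hc0 Hd].
  assert (Hconst : forall f, (forall s, derivable_pt_lim f s 0) -> forall w, f w = f 0).
  { intros f Hf w; pose proof (Rabs_incr_le_of_deriv f (fun _ => 0) 0 w 0 (fun s _ => Hf s)
      ltac:(intros; cbv beta; rewrite Rabs_R0; lra)) as H.
    rewrite Rmult_0_l in H; apply Rminus_diag_uniq.
    destruct (Req_dec (f w - f 0) 0) as [|Hne]; auto.
    pose proof (Rabs_pos_lt _ Hne); lra. }
  assert (E1 : forall w, px (c w) = x + w).
  { intros w; enough (px (c w) - w = px (c 0) - 0) by (rewrite Hc0 in H; unfold px at 2 in H; simpl in H; lra).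
    apply (Hconst (fun u => px (c u) - u)); intros s; rewrite <- (Rminus_diag_eq 1 1) by reflexivity.
    apply derivable_pt_lim_sub; [apply Hd|apply derivable_pt_lim_id]. }
  assert (E2 : forall w, py (c w) = y).
  { intros w; rewrite (Hconst (fun u => py (c u))), Hc0; [reflexivity|intros s; apply Hd]. }
  split; [auto|split; [auto|split; [rewrite Hc0; reflexivity|]]].
  intros w; destruct (Hd w) as [_ [_ H]]; rewrite E1, E2 in H; exact H.
Qed.

Lemma height_along_x m phi D x y T S kappa : smooth_family phi D ->
  (forall w, derivable_pt_lim T w (w2m m (x + w) y * y)) ->
  (forall w, 0 <= w <= S -> kappa <= - XF m D (x + w) y) ->
  forall w, 0 <= w <= S -> (T w - phi (x + w) y) - (T 0 - phi (x + 0) y) >= kappa * w.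
Proof.
  intros [H0 [Hx _]] HT Hk w Hw; destruct (Req_dec w 0) as [->|Hw0]; [lra|].
  set (F := fun u => T u - D nil (1 * u + x) y).
  assert (HF : forall u, derivable_pt_lim F u (- XF m D (x + u) y)).
  { intros u; unfold F, XF.
    replace (- (D (false :: nil) (x + u) y - w2m m (x + u) y * y))
      with (w2m m (x + u) y * y - D (false :: nil) (1 * u + x) y * 1)
      by (replace (1 * u + x) with (x + u) by ring; ring).
    apply derivable_pt_lim_sub; [apply HT|apply (derivable_pt_lim_affine (fun v => D nil v y)), Hx]. }
  destruct (MVT_cor2 F (fun u => - XF m D (x + u) y) 0 w ltac:(lra) (fun c _ => HF c)) as [c [Hc1 Hc2]].
  unfold F in Hc1; rewrite <- H0.
  replace (x + w) with (1 * w + x) by ring; replace (x + 0) with (1 * 0 + x) by ring.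
  rewrite Hc1; specialize (Hk c ltac:(lra)); nra.
Qed.

Lemma gamma_curve_eq (c : R -> pt) x y sbar u :
  (forall w, px (c w) = x + w) -> (forall w, py (c w) = y) -> 0 <= u ->
  gamma_curve c sbar u = (x + Rmin u sbar, y, pt3 (c (Rmin u sbar)) + Rmax 0 (u - sbar)).
Proof.
  intros E1 E2 Hu; unfold gamma_curve; destruct (Rle_dec u sbar).
  - rewrite Rmin_left, Rmax_left by lra; rewrite <- (E1 u), <- (E2 u).
    destruct (c u) as [[p1 p2] p3]; unfold px, py, pt3; simpl; f_equal; ring.
  - rewrite Rmin_right, Rmax_right by lra; rewrite E1, E2; reflexivity.
Qed.

Lemma cross_term_le u v al be c : 0 < al -> c * c <= 4 * al * be ->
  c * u * v <= al * u * u + be * v * v.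
Proof.
  intros Ha Hc.
  assert (E : 4 * al * (al * u * u + be * v * v - c * u * v)
              = (2 * al * u - c * v) * (2 * al * u - c * v) + (4 * al * be - c * c) * (v * v)) by ring.
  assert (0 <= (4 * al * be - c * c) * (v * v)) by (apply Rmult_le_pos; [lra|apply Rle_0_sqr]).
  pose proof (Rle_0_sqr (2 * al * u - c * v)); unfold Rsqr in *; nra.
Qed.

Section EpigraphCone.

Variables (m C : R) (phi : R -> R -> R) (D : list bool -> R -> R -> R).
Hypotheses (hm : 1 <= m) (hC : 0 < C).

(* |ZF z| <= ZF_growth |z|^(2m+1) (normZF_le); ZF_lip |z0|^(2m) is a Lipschitz constant of
   |ZF| and XF near z0 (ZF_near_lipschitz); doubling bounds |2 z|^(2m) / |z|^(2m). *)
Definition ZF_growth : R := 2 * C + 2.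
Definition ZF_lip : R := 4 * rpow 4 (2 * m) * (C + 16 * m + 1).
Definition doubling : R := rpow 2 (2 * m).
Definition eps0 : R := / (8 * (ZF_growth + ZF_lip + 1)).
Definition mu : R := eps0 / (2000 * doubling * ((ZF_lip + 1) * (ZF_growth + 1))).
Definition lam : R := mu / 8.

Lemma consts_pos : 0 < ZF_growth /\ 0 < ZF_lip /\ 1 <= doubling.
Proof.
  unfold ZF_growth, ZF_lip, doubling; pose proof (rpow_ge1 4 (2 * m) ltac:(lra) ltac:(lra)).
  split; [lra|split; [apply Rmult_lt_0_compat; lra|apply rpow_ge1; lra]].
Qed.

Lemma eps0_facts : 0 < eps0 /\ eps0 * ZF_growth <= 1 / 8 /\ eps0 * ZF_lip <= 1 / 8 /\ eps0 <= 1 / 8.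
Proof.
  destruct consts_pos as [H1 [H2 H3]].
  assert (E : eps0 * (8 * (ZF_growth + ZF_lip + 1)) = 1) by (unfold eps0; field; lra).
  assert (0 < eps0) by (unfold eps0; apply Rinv_0_lt_compat; lra).
  repeat split; nra.
Qed.

Lemma mu_facts : 0 < mu /\ mu <= 1 / 60 /\ mu * ZF_growth <= 1 / 20 /\
  mu * mu * 1600 * doubling <= eps0 /\ mu * mu * ZF_lip <= 1 / 64 /\ mu * mu * ZF_lip * doubling <= 1 / 400.
Proof.
  destruct consts_pos as [H1 [H2 H3]]; destruct eps0_facts as [He [_ [_ He1]]].
  set (K := (ZF_lip + 1) * (ZF_growth + 1)).
  assert (HK : 1 <= K) by (unfold K; nra).
  assert (HdK : 0 < 2000 * doubling * K) by nra.
  assert (E : mu * (2000 * doubling * K) = eps0) by (unfold mu; fold K; field; lra).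
  assert (Hmu : 0 < mu) by (unfold mu; fold K; apply Rdiv_lt_0_compat; lra).
  assert (A1 : mu * doubling <= eps0 / 2000) by nra.
  assert (A2 : mu <= eps0 / 2000) by nra.
  assert (A3 : mu * (ZF_lip * doubling) <= eps0 / 2000).
  { assert (ZF_lip <= K) by (unfold K; nra).
    assert (K <= K * doubling) by nra.
    assert (mu * (ZF_lip * doubling) <= mu * (K * doubling)) by (apply Rmult_le_compat_l; nra); nra. }
  assert (A4 : mu * ZF_growth <= eps0 / 2000).
  { assert (ZF_growth <= K) by (unfold K; nra).
    assert (K <= K * doubling) by nra.
    assert (mu * ZF_growth <= mu * (K * doubling)) by (apply Rmult_le_compat_l; nra); nra. }
  assert (mu * (mu * doubling) <= (eps0 / 2000) * (eps0 / 2000)) by (apply Rmult_le_compat; nra).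
  assert (mu * ZF_lip <= mu * (ZF_lip * doubling)) by (apply Rmult_le_compat_l; nra).
  assert (mu * (mu * ZF_lip) <= (eps0 / 2000) * (eps0 / 2000)) by (apply Rmult_le_compat; nra).
  assert (mu * (mu * (ZF_lip * doubling)) <= (eps0 / 2000) * (eps0 / 2000)) by (apply Rmult_le_compat; nra).
  repeat split; nra.
Qed.

(* Near gamma (r <= rho/4) the gradient |ZF| stays comparable to its value a at the start;
   far from it d >> r, and the height d^(2m+2) <= tau gained by the loops dominates. *)
Lemma margin_quadratic a Pr sig sbar tau d r :
  0 < a -> 0 < Pr -> sbar = eps0 * a / Pr -> 0 <= sig <= sbar -> 0 <= d ->
  Pr * (d * d) <= doubling * tau -> 0 <= tau -> 0 < r -> r < mu * (sig + 5 * d) ->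
  ZF_lip * Pr * r * r <= a * sig / 32 + tau / 8.
Proof.
  intros Ha HP Hsb Hsig Hd Hdt Ht Hr Hrl.
  destruct consts_pos as [_ [HLZ HP2]]; destruct eps0_facts as [He [_ [_ He1]]].
  destruct mu_facts as [Hmu0 [_ [_ [_ [Hmu4 Hmu5]]]]].
  assert (Hr2 : r * r <= 2 * (mu * mu) * (sig * sig) + 50 * (mu * mu) * (d * d)).
  { assert (r * r <= (mu * (sig + 5 * d)) * (mu * (sig + 5 * d))) by (apply Rmult_le_compat; lra).
    pose proof (Rle_0_sqr (mu * (sig - 5 * d))); unfold Rsqr in *; nra. }
  assert (HPs : Pr * sig <= eps0 * a).
  { assert (Pr * sig <= Pr * sbar) by (apply Rmult_le_compat_l; lra).
    replace (Pr * sbar) with (eps0 * a) in * by (rewrite Hsb; field; lra); lra. }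
  assert (T1 : ZF_lip * Pr * (2 * (mu * mu) * (sig * sig)) <= a * sig / 32).
  { replace (ZF_lip * Pr * (2 * (mu * mu) * (sig * sig))) with (2 * (mu * mu * ZF_lip) * (Pr * sig) * sig) by ring.
    assert (Pr * sig * sig <= eps0 * a * sig) by (apply Rmult_le_compat_r; lra).
    assert (2 * (mu * mu * ZF_lip) * (Pr * sig) * sig <= 2 * (1 / 64) * (eps0 * a * sig))
      by (rewrite Rmult_assoc; apply Rmult_le_compat; nra).
    assert (0 <= a * sig) by (apply Rmult_le_pos; lra).
    assert (eps0 * (a * sig) <= 1 * (a * sig)) by (apply Rmult_le_compat_r; lra); nra. }
  assert (T2 : ZF_lip * Pr * (50 * (mu * mu) * (d * d)) <= tau / 8).
  { replace (ZF_lip * Pr * (50 * (mu * mu) * (d * d))) with (50 * (mu * mu * ZF_lip) * (Pr * (d * d))) by ring.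
    assert (50 * (mu * mu * ZF_lip) * (Pr * (d * d)) <= 50 * (mu * mu * ZF_lip) * (doubling * tau))
      by (apply Rmult_le_compat_l; nra); nra. }
  assert (ZF_lip * Pr * (r * r) <= ZF_lip * Pr * (2 * (mu * mu) * (sig * sig) + 50 * (mu * mu) * (d * d)))
    by (apply Rmult_le_compat_l; nra).
  nra.
Qed.

Lemma margin_near a Pr sig sbar tau d r h0 :
  0 < a -> 0 < Pr -> sbar = eps0 * a / Pr -> 0 <= sig <= sbar -> (0 < d -> sig = sbar) -> 0 <= d ->
  Pr * (d * d) <= doubling * tau -> 0 <= tau -> 0 < r -> r < mu * (sig + 5 * d) -> 0 < h0 ->
  (9 / 8 * a + ZF_lip * Pr * r) * r < h0 + a * sig / 4 + tau.
Proof.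
  intros Ha HP Hsb Hsig Hds Hd Hdt Ht Hr Hrl Hh0.
  pose proof (margin_quadratic a Pr sig sbar tau d r Ha HP Hsb Hsig Hd Hdt Ht Hr Hrl) as Hq.
  destruct consts_pos as [_ [_ HP2]]; destruct eps0_facts as [He _].
  destruct mu_facts as [Hmu0 [Hmu1 [_ [Hmu3 _]]]].
  assert (Hlsig : a * (mu * sig) <= a * sig / 32).
  { assert (0 <= a * sig) by (apply Rmult_le_pos; lra).
    assert (mu * (a * sig) <= 1 / 32 * (a * sig)) by (apply Rmult_le_compat_r; lra); lra. }
  destruct (Req_dec d 0) as [Hd0|Hd0].
  - subst d; assert (9 / 8 * a * r <= 9 / 8 * a * (mu * sig)) by (apply Rmult_le_compat_l; nra); nra.
  - specialize (Hds ltac:(lra)); subst sig.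
    assert (T1 : 9 / 8 * a * r <= 9 / 8 * a * (mu * sbar) + 6 * mu * a * d).
    { assert (9 / 8 * a * r <= 9 / 8 * a * (mu * (sbar + 5 * d))) by (apply Rmult_le_compat_l; lra).
      assert (0 <= mu * a * d) by (apply Rmult_le_pos; [apply Rmult_le_pos|]; lra).
      replace (9 / 8 * a * (mu * (sbar + 5 * d))) with (9 / 8 * a * (mu * sbar) + 45 / 8 * (mu * a * d)) in H by field.
      lra. }
    assert (T1b : 6 * mu * a * d <= eps0 / (16 * Pr) * a * a + Pr / (4 * doubling) * d * d).
    { apply cross_term_le; [apply Rdiv_lt_0_compat; lra|].
      replace (4 * (eps0 / (16 * Pr)) * (Pr / (4 * doubling))) with (eps0 / (16 * doubling)) by (field; lra).
      apply Rmult_le_reg_r with (16 * doubling); [lra|].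
      replace (eps0 / (16 * doubling) * (16 * doubling)) with eps0 by (field; lra); nra. }
    assert (E1 : eps0 / (16 * Pr) * a * a = a * sbar / 16) by (rewrite Hsb; field; lra).
    assert (E2 : Pr / (4 * doubling) * d * d <= tau / 4).
    { replace (Pr / (4 * doubling) * d * d) with ((Pr * (d * d)) / (4 * doubling)) by (field; lra).
      apply Rmult_le_reg_r with (4 * doubling); [lra|].
      replace (Pr * (d * d) / (4 * doubling) * (4 * doubling)) with (Pr * (d * d)) by (field; lra); nra. }
    assert (0 <= a * sbar) by (apply Rmult_le_pos; lra).
    nra.
Qed.

Lemma margin_far rho sig sbar tau d r h0 a :
  0 < rho -> 0 <= sig <= sbar -> sbar <= rho / 4 -> 0 <= d ->
  rho / 4 < r -> r < mu * (sig + 5 * d) ->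
  (d <= 3 * rho / 2 \/ angular_rate m d <= tau) -> 0 <= tau -> 0 < h0 -> 0 <= a ->
  ZF_growth * (wrad m (6 * r) * (6 * r)) * r < h0 + a * sig / 4 + tau.
Proof.
  intros Hrho Hsig Hsb Hd Hr Hrl Hor Ht Hh0 Ha.
  destruct consts_pos as [HC1 _]; destruct mu_facts as [Hmu0 [Hmu1 [Hmu2 _]]].
  assert (A1 : mu * sig <= r / 60) by (assert (mu * sig <= 1 / 60 * sig) by (apply Rmult_le_compat_r; lra); lra).
  assert (A3 : 11 * r < d) by (assert (5 * mu * d <= 5 * (1 / 60) * d) by (apply Rmult_le_compat_r; lra); lra).
  assert (HfR : angular_rate m d <= tau) by (destruct Hor; auto; lra).
  assert (A4 : wrad m (6 * r) * (6 * r) <= wrad m d * d) by (apply wrad_mul_le_compat; lra).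
  assert (HP : 0 <= wrad m (6 * r) * (6 * r)) by (apply Rmult_le_pos; [apply wrad_ge0|lra]).
  assert (ZF_growth * (wrad m (6 * r) * (6 * r)) * r <= ZF_growth * (wrad m d * d) * (6 * mu * d))
    by (apply Rmult_le_compat; [apply Rmult_le_pos; lra|lra|apply Rmult_le_compat_l; lra|lra]).
  assert (E : ZF_growth * (wrad m d * d) * (6 * mu * d) = 6 * (mu * ZF_growth) * angular_rate m d)
    by (unfold angular_rate; ring).
  pose proof (angular_rate_ge0 m d).
  assert (6 * (mu * ZF_growth) * angular_rate m d <= 6 * (1 / 20) * angular_rate m d)
    by (apply Rmult_le_compat_r; lra).
  assert (0 <= a * sig) by (apply Rmult_le_pos; lra).
  lra.
Qed.

Hypothesis hsmooth : smooth_family phi D.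
Hypothesis hD2 : forall w x y, length w = 2%nat -> Rabs (D w x y) <= C * rpow (norm2 x y) (2 * m).
Hypothesis hD1 : forall w x y, length w = 1%nat -> Rabs (D w x y) <= C * rpow (norm2 x y) (2 * m + 1).

Variables (x y t : R) (c : R -> pt).
Hypothesis Hxf : - XF m D x y > / 2 * normZF m D x y.
Hypothesis Hepi : epi phi (x, y, t).
Hypothesis Hc : integral_curve_X m (x, y, t) c.

Let a := normZF m D x y.
Let rho := norm2 x y.
Let sbar := eps0 * a / w2m m x y.
Let gamma := gamma_curve c sbar.

Lemma start_facts : 0 < a /\ 0 < rho /\ 0 < sbar /\ sbar <= rho / 8.
Proof.
  assert (Ha : 0 < a).
  { pose proof (Rabs_le_norm2_l (XF m D x y) (YF m D x y)); pose proof (Rle_abs (- XF m D x y)).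
    rewrite Rabs_Ropp in *; unfold a, normZF in *; lra. }
  pose proof (normZF_le m C D hD1 x y) as HZ; fold a rho in HZ.
  assert (Hrho : 0 < rho).
  { destruct (norm2_ge0 x y) as [H|H]; auto; fold rho in H.
    rewrite <- H in HZ; unfold wrad in HZ; rewrite rpow_0_l in HZ; lra. }
  assert (HP : 0 < w2m m x y) by (apply rpow_gt0; auto).
  destruct eps0_facts as [He [HeC1 _]].
  assert (Hsb : sbar * w2m m x y = eps0 * a) by (unfold sbar; field; lra).
  repeat split; auto; [unfold sbar; apply Rdiv_lt_0_compat; nra|].
  apply Rmult_le_reg_r with (w2m m x y); auto; rewrite Hsb.
  assert (eps0 * a <= eps0 * (ZF_growth * (w2m m x y * rho))) by (apply Rmult_le_compat_l; [lra|exact HZ]).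
  assert (eps0 * ZF_growth * (w2m m x y * rho) <= 1 / 8 * (w2m m x y * rho))
    by (apply Rmult_le_compat_r; [apply Rmult_le_pos|]; lra).
  nra.
Qed.

Lemma x_segment_annulus w : 0 <= w <= sbar ->
  rho / 2 <= norm2 (x + w) y <= 3 * rho / 2 /\ norm2 (x + w - x) (y - y) = w.
Proof.
  intros Hw; destruct start_facts as [_ [Hrho [_ Hsb]]].
  assert (Hn : norm2 (x + w - x) (y - y) = w).
  { replace (x + w - x) with w by ring; replace (y - y) with 0 by ring; rewrite norm2_x_0, Rabs_right; lra. }
  pose proof (norm2_triang_rev (x + w) y x y) as H; rewrite Hn in H; fold rho in H.
  pose proof (Rle_abs (norm2 (x + w) y - rho)); pose proof (Rle_abs (- (norm2 (x + w) y - rho))).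
  rewrite Rabs_Ropp in *; split; [split|]; lra.
Qed.

Lemma ZF_near_annulus z1 z2 w1 w2 :
  rho / 2 <= norm2 z1 z2 <= 3 * rho / 2 -> norm2 (w1 - z1) (w2 - z2) <= rho / 4 ->
  Rabs (normZF m D w1 w2 - normZF m D z1 z2) <= ZF_lip * w2m m x y * norm2 (w1 - z1) (w2 - z2) /\
  Rabs (XF m D w1 w2 - XF m D z1 z2) <= ZF_lip * w2m m x y * norm2 (w1 - z1) (w2 - z2).
Proof.
  destruct start_facts as [_ [Hrho _]].
  apply (ZF_near_lipschitz m C phi D ltac:(lra) ltac:(lra) hsmooth hD2); auto.
Qed.

Lemma ZF_along_x_segment w : 0 <= w <= sbar ->
  Rabs (normZF m D (x + w) y - a) <= a / 8 /\ a / 4 <= - XF m D (x + w) y.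
Proof.
  intros Hw; destruct start_facts as [Ha [Hrho [_ Hsb]]]; destruct (x_segment_annulus w Hw) as [_ Hn].
  destruct eps0_facts as [_ [_ [HeLZ _]]]; destruct consts_pos as [_ [HLZ _]].
  assert (HP : 0 < w2m m x y) by (apply rpow_gt0; auto).
  destruct (ZF_near_annulus x y (x + w) y) as [HZ HX]; [fold rho; lra|rewrite Hn; lra|].
  rewrite Hn in HZ, HX.
  assert (ZF_lip * w2m m x y * w <= ZF_lip * w2m m x y * sbar)
    by (apply Rmult_le_compat_l; [apply Rmult_le_pos|]; lra).
  assert (ZF_lip * w2m m x y * sbar = (eps0 * ZF_lip) * a) by (unfold sbar; field; lra).
  assert ((eps0 * ZF_lip) * a <= 1 / 8 * a) by (apply Rmult_le_compat_r; lra).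
  pose proof (Rle_abs (XF m D (x + w) y - XF m D x y)); pose proof (Rle_abs (- (XF m D (x + w) y - XF m D x y))).
  rewrite Rabs_Ropp in *; pose proof Hxf; unfold a in *; split; lra.
Qed.

Lemma gamma_eq u : 0 <= u ->
  gamma u = (x + Rmin u sbar, y, pt3 (c (Rmin u sbar)) + Rmax 0 (u - sbar)).
Proof.
  destruct (integral_curve_X_spec m x y t c Hc) as [E1 [E2 _]]; intros; apply gamma_curve_eq; auto.
Qed.

Lemma gamma_height u : 0 <= u ->
  height phi (gamma u) >= (t - phi x y) + a / 4 * Rmin u sbar + Rmax 0 (u - sbar).
Proof.
  intros Hu; destruct (integral_curve_X_spec m x y t c Hc) as [_ [_ [Et0 ET]]].
  rewrite gamma_eq by auto; unfold height, px, py, pt3; cbn [fst snd].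
  assert (Hm : 0 <= Rmin u sbar <= sbar)
    by (split; [apply Rmin_glb; [lra|pose proof start_facts; lra]|apply Rmin_r]).
  pose proof (height_along_x m phi D x y (fun w => pt3 (c w)) sbar (a / 4) hsmooth ET
    (fun w Hw => proj2 (ZF_along_x_segment w Hw)) (Rmin u sbar) Hm) as H.
  cbv beta in H; rewrite Et0, Rplus_0_r in H; unfold pt3 at 1 in H.
  pose proof (Rmax_l 0 (u - sbar)); unfold pt3; lra.
Qed.

Lemma gamma_in_epi s : 0 <= s -> epi phi (gamma s).
Proof.
  intros Hs; pose proof (gamma_height s Hs); destruct start_facts as [Ha [_ [Hsb _]]].
  assert (0 <= a / 4 * Rmin s sbar) by (apply Rmult_le_pos; [lra|apply Rmin_glb; lra]).
  pose proof (Rmax_l 0 (s - sbar)); unfold epi, pt3, px, py in Hepi; simpl in Hepi.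
  unfold epi, height in *; lra.
Qed.

Lemma clamp_bounds u s sbar' : 0 <= u <= s -> 0 <= sbar' ->
  0 <= Rmin u sbar' <= Rmin s sbar' /\ 0 <= Rmax 0 (u - sbar') <= Rmax 0 (s - sbar').
Proof.
  intros Hu Hs; unfold Rmin, Rmax.
  destruct (Rle_dec u sbar'); destruct (Rle_dec s sbar'); destruct (Rle_dec 0 (u - sbar'));
    destruct (Rle_dec 0 (s - sbar')); lra.
Qed.

Lemma Rmin_of_excess s sbar' : 0 < Rmax 0 (s - sbar') -> Rmin s sbar' = sbar'.
Proof. unfold Rmin, Rmax; destruct (Rle_dec 0 (s - sbar')); destruct (Rle_dec s sbar'); lra. Qed.

(* The diameter condition is tested against the explicit curve x-segment + vertical loop. *)
Lemma gamma_chord_bound s u v r : 0 <= u <= s -> 0 <= v <= s -> 0 < r ->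
  cc_dist_gt m (gamma u) (gamma v) (r / lam) ->
  exists d, 0 <= d /\ r < mu * (Rmin s sbar + 5 * d) /\
    w2m m x y * (d * d) <= doubling * Rmax 0 (s - sbar) /\
    (d <= 3 * rho / 2 \/ angular_rate m d <= Rmax 0 (s - sbar)).
Proof.
  intros Hu Hv Hr [r' [Hr' Hall]].
  destruct start_facts as [Ha [Hrho [Hsb0 Hsb]]].
  destruct (integral_curve_X_spec m x y t c Hc) as [_ [_ [_ ET]]].
  destruct (clamp_bounds u s sbar Hu ltac:(lra)) as [Hu' Ho1].
  destruct (clamp_bounds v s sbar Hv ltac:(lra)) as [Hv' Ho2].
  assert (Hsig : Rmin s sbar <= sbar) by apply Rmin_r.
  destruct (x_segment_annulus (Rmin v sbar) ltac:(lra)) as [Hrb _].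
  destruct (hcurve_x_segment_loop m x y (fun w => pt3 (c w)) (Rmin u sbar) (Rmin v sbar)
    (Rmax 0 (u - sbar)) (Rmax 0 (v - sbar)) ltac:(lra) ET ltac:(lra)) as [d [G [Hd [HG [HGL [Hdd Hdalt]]]]]].
  rewrite <- !gamma_eq in HG by lra.
  specialize (Hall G HG _ HGL).
  assert (Hotau : Rabs (Rmax 0 (v - sbar) - Rmax 0 (u - sbar)) <= Rmax 0 (s - sbar)) by (apply Rabs_le; lra).
  destruct mu_facts as [Hmu _].
  exists d; split; [auto|split; [|split]].
  - assert (Rabs (Rmin v sbar - Rmin u sbar) <= Rmin s sbar) by (apply Rabs_le; lra).
    assert (r / lam * lam < 2 * (Rmin s sbar + 20 * d) * lam) by (apply Rmult_lt_compat_r; [unfold lam; lra|lra]).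
    replace (r / lam * lam) with r in H0 by (unfold lam; field; lra).
    unfold lam in H0; nra.
  - apply Rle_trans with (doubling * wrad m (norm2 (x + Rmin v sbar) y) * (d * d)).
    + apply Rmult_le_compat_r; [nra|apply wrad_le_doubling; fold rho; lra].
    + rewrite Rmult_assoc; apply Rmult_le_compat_l; [apply rpow_ge0|lra].
  - destruct Hdalt; [left|right]; lra.
Qed.

Lemma gamma_s_facts s : 0 <= s ->
  gamma s = (x + Rmin s sbar, y, pt3 (c (Rmin s sbar)) + Rmax 0 (s - sbar)) /\
  0 <= Rmin s sbar <= sbar /\ rho / 2 <= norm2 (x + Rmin s sbar) y <= 3 * rho / 2.
Proof.
  intros Hs; destruct start_facts as [_ [_ [Hsb0 _]]].
  assert (0 <= Rmin s sbar <= sbar) by (split; [apply Rmin_glb|apply Rmin_r]; lra).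
  split; [apply gamma_eq; auto|split; [auto|apply x_segment_annulus; auto]].
Qed.

Lemma height_drop_near s q g' L r : 0 < s -> hcurve m (gamma s) q g' -> length_le g' L -> L < r ->
  r <= rho / 4 -> height phi q >= height phi (gamma s) - (9 / 8 * a + ZF_lip * w2m m x y * r) * r.
Proof.
  intros Hs Hg' HL HLr Hr; destruct (gamma_s_facts s ltac:(lra)) as [Hgs [Hsig Hann]].
  destruct start_facts as [Ha [Hrho _]]; destruct consts_pos as [_ [HLZ _]].
  pose proof (length_le_ge0 _ _ HL).
  assert (HP : 0 < w2m m x y) by (apply rpow_gt0; auto).
  set (M := 9 / 8 * a + ZF_lip * w2m m x y * r).
  assert (0 <= ZF_lip * w2m m x y * r) by (apply Rmult_le_pos; [apply Rmult_le_pos|]; lra).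
  assert (HM : 0 <= M) by (unfold M; lra).
  assert (M * L <= M * r) by (apply Rmult_le_compat_l; lra).
  enough (height phi q >= height phi (gamma s) - M * L) by lra.
  apply (height_drop_le m C phi D ltac:(lra) ltac:(lra) hsmooth hD1 _ _ g'); auto.
  intros w1 w2 Hw; rewrite Hgs in Hw; unfold px, py in Hw; cbn [fst snd] in Hw.
  destruct (ZF_near_annulus _ _ w1 w2 Hann ltac:(lra)) as [HZ _].
  pose proof (proj1 (ZF_along_x_segment _ Hsig)).
  assert (ZF_lip * w2m m x y * norm2 (w1 - (x + Rmin s sbar)) (w2 - y) <= ZF_lip * w2m m x y * r)
    by (apply Rmult_le_compat_l; [apply Rmult_le_pos|]; lra).
  pose proof (Rle_abs (normZF m D w1 w2 - normZF m D (x + Rmin s sbar) y)).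
  pose proof (Rle_abs (normZF m D (x + Rmin s sbar) y - a)); unfold M; lra.
Qed.

Lemma height_drop_far s q g' L r : 0 < s -> hcurve m (gamma s) q g' -> length_le g' L -> L < r ->
  rho / 4 < r -> height phi q >= height phi (gamma s) - ZF_growth * (wrad m (6 * r) * (6 * r)) * r.
Proof.
  intros Hs Hg' HL HLr Hr; destruct (gamma_s_facts s ltac:(lra)) as [Hgs [Hsig _]].
  destruct start_facts as [_ [Hrho [_ Hsb]]]; destruct consts_pos as [HC1 _].
  pose proof (length_le_ge0 _ _ HL).
  set (M := ZF_growth * (wrad m (6 * r) * (6 * r))).
  assert (HM : 0 <= M) by (unfold M; apply Rmult_le_pos; [lra|apply Rmult_le_pos; [apply wrad_ge0|lra]]).
  assert (M * L <= M * r) by (apply Rmult_le_compat_l; lra).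
  enough (height phi q >= height phi (gamma s) - M * L) by lra.
  apply (height_drop_le m C phi D ltac:(lra) ltac:(lra) hsmooth hD1 _ _ g'); auto.
  intros w1 w2 Hw; rewrite Hgs in Hw; unfold px, py in Hw; cbn [fst snd] in Hw.
  assert (Hnw : norm2 w1 w2 <= 6 * r).
  { pose proof (norm2_triang (x + Rmin s sbar) y (w1 - (x + Rmin s sbar)) (w2 - y)) as T1.
    replace (x + Rmin s sbar + (w1 - (x + Rmin s sbar))) with w1 in T1 by ring.
    replace (y + (w2 - y)) with w2 in T1 by ring.
    pose proof (norm2_triang x y (Rmin s sbar) 0) as T2; replace (y + 0) with y in T2 by ring.
    rewrite norm2_x_0, Rabs_right in T2 by lra; fold rho in T2; lra. }
  eapply Rle_trans; [apply (normZF_le m C D hD1)|].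
  apply Rmult_le_compat_l; [lra|apply wrad_mul_le_compat; [lra|split; [apply norm2_ge0|lra]]].
Qed.

Lemma ball_in_epi s q : 0 < s ->
  in_ball_diam m (gamma s) lam (fun p => exists u, 0 <= u <= s /\ p = gamma u) q -> epi phi q.
Proof.
  intros Hs [r [[g' [L [Hg' [HL HLr]]]] [pa [pb [[u [Hu ->]] [[v [Hv ->]] Hdiam]]]]]].
  assert (Hr : 0 < r) by (pose proof (length_le_ge0 _ _ HL); lra).
  destruct (gamma_chord_bound s u v r Hu Hv Hr Hdiam) as [d [Hd [Hrl [Hdd Hdalt]]]].
  destruct start_facts as [Ha [Hrho [Hsb0 Hsb]]].
  assert (Hds : 0 < d -> Rmin s sbar = sbar).
  { intros Hdp; apply Rmin_of_excess; pose proof (rpow_gt0 rho (2 * m) Hrho) as HP.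
    pose proof (Rmult_lt_0_compat _ _ HP (Rmult_lt_0_compat _ _ Hdp Hdp)); destruct consts_pos as [_ [_ HP2]].
    unfold w2m in Hdd; fold rho in Hdd; nra. }
  pose proof (gamma_height s ltac:(lra)) as Hhs.
  assert (Hh0 : 0 < t - phi x y) by (unfold epi, pt3, px, py in Hepi; simpl in Hepi; lra).
  assert (Hsig : 0 <= Rmin s sbar <= sbar) by (split; [apply Rmin_glb|apply Rmin_r]; lra).
  pose proof (Rmax_l 0 (s - sbar)) as Htau.
  enough (0 < height phi q) by (unfold epi, height in *; lra).
  destruct (Rle_dec r (rho / 4)) as [Hnear|Hfar].
  - pose proof (height_drop_near s q g' L r Hs Hg' HL HLr Hnear).
    pose proof (margin_near a (w2m m x y) (Rmin s sbar) sbar (Rmax 0 (s - sbar)) d r (t - phi x y)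
      Ha ltac:(apply rpow_gt0; auto) eq_refl Hsig Hds Hd Hdd Htau Hr Hrl Hh0); lra.
  - pose proof (height_drop_far s q g' L r Hs Hg' HL HLr ltac:(lra)).
    pose proof (margin_far rho (Rmin s sbar) sbar (Rmax 0 (s - sbar)) d r (t - phi x y) a
      Hrho Hsig ltac:(lra) Hd ltac:(lra) Hrl Hdalt Htau Hh0 ltac:(lra)); lra.
Qed.

End EpigraphCone.

Theorem theorem5p2 (m : R) (hm : 1 <= m)
  (phi : R -> R -> R) (D : list bool -> R -> R -> R)
  (hsmooth : smooth_family phi D)
  (C : R) (hC : 0 < C)
  (hD3 : forall w x y, length w = 3%nat ->
           Rabs (D w x y) <= C * rpow (norm2 x y) (2 * m - 1))
  (hD2 : forall w x y, length w = 2%nat ->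
           Rabs (D w x y) <= C * rpow (norm2 x y) (2 * m))
  (hD1 : forall w x y, length w = 1%nat ->
           Rabs (D w x y) <= C * rpow (norm2 x y) (2 * m + 1)) :
  exists eps0 lam, 0 < eps0 /\ 0 < lam /\
    forall x y t,
      - XF m D x y > / 2 * normZF m D x y ->
      epi phi (x, y, t) ->
      forall c : R -> pt, integral_curve_X m (x, y, t) c ->
      let sbar := eps0 * normZF m D x y / w2m m x y in
      let g := gamma_curve c sbar in
      (forall s, 0 <= s -> epi phi (g s)) /\
      (forall s, 0 < s -> forall q,
         in_ball_diam m (g s) lam (fun p => exists u, 0 <= u <= s /\ p = g u) q ->
         epi phi q).
Proof.
  exists (eps0 m C), (lam m C).
  destruct (eps0_facts m C hm hC) as [He _]; destruct (mu_facts m C hm hC) as [Hlp _].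
  split; [exact He|split; [unfold lam; lra|]].
  intros x y t Hxf Hepi c Hc; split.
  - exact (gamma_in_epi m C phi D hm hC hsmooth hD2 hD1 x y t c Hxf Hepi Hc).
  - intros s Hs q; exact (ball_in_epi m C phi D hm hC hsmooth hD2 hD1 x y t c Hxf Hepi Hc s q Hs).
Qed.
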